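(* Consider the static single-object erasure-coded Byzantine read/write protocol described in the context over a set $C$ of flexnodes, at most $b<\frac{|C|-k}{3}$ of which are Byzantine, and suppose at most $\delta$ write operations are concurrent with any read. In any execution, if $\rho_1,\rho_2$ are complete read operations such that $\rho_1$ completes before $\rho_2$ is invoked, $\rho_1$ returns a value associated with tag $t_{\rho_1}$ and $\rho_2$ returns a value associated with tag $t_{\rho_2}$, then $t_{\rho_2}\ge t_{\rho_1}$.
   Context: Model. $C$ is a fixed finite set of processes (''flexnodes'') over asynchronous reliable channels. Up to $b$ flexnodes may be Byzantine. Processes invoking reads/writes follow the protocol but may crash. Signatures are unforgeable. An $[n,k]$ RLNC code with $n=|C|$: $\mathrm{Encode}(v)$ produces $|C|$ coded elements, any $k$ of which (from the same encoding) recover $v$. Tags are pairs $(z,w)$, $z\in\mathbb{N}$, $w$ a writer identifier, ordered lexicographically. A parameter $\delta\ge1$ is fixed. A quorum is any subset of $C$ of size $\lceil (2|C|+k)/3\rceil$. State. Each flexnode keeps a set $List$ of signed triples $(\langle t,e\rangle,\sigma)$, initially holding the initial pair with tag $t_0$. Primitives (by flexnode $p$): get-tag: query all, each replies with its signed max-tag entry, wait for replies from a quorum, return the maximum verified tag. put-data$(\langle t,v\rangle)$: encode $v$ into $e_1,\dots,e_{|C|}$, send $\langle t,e_j\rangle$ signed by $p$ to the $j$-th flexnode; a receiver adds it to $List$ if the signature verifies and no entry with tag $t$ exists, then if $|List|>\delta+1$ removes the entries with minimum tag, and acknowledges; $p$ waits for a quorum of acknowledgements. get-data: query all, each replies with its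 $List$, wait for a quorum, keep verified pairs, take the maximum tag appearing in at least $k$ received lists, decode and return it with its tag; if none exists the primitive does not complete. Operations: read = get-data returning $\langle t,v\rangle$, then put-data$(\langle t,v\rangle)$, then return $\langle t,v\rangle$; write$(v)$ by $w$ = get-tag returning $t$, then put-data$(\langle (t.z+1,w),v\rangle)$. *)

(* An operational model of the static single-object erasure-coded Byzantine
   read/write protocol: flexnodes 'I_n (some Byzantine set B), clients named
   by nat (client id = writer identifier), asynchronous reliable channels
   modelled as a multiset of in-transit messages delivered in any order. *)
From HB Require Import structures.
From mathcomp Require Import all_boot.
Set Implicit Arguments. Unset Strict Implicit. Unset Printing Implicit Defensive.

Definition Tag := (nat * nat)%type.
Definition tag_lt (t1 t2 : Tag) : bool :=
  (t1.1 < t2.1) || ((t1.1 == t2.1) && (t1.2 < t2.2)).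
Definition tag_le (t1 t2 : Tag) : bool := (t1 == t2) || tag_lt t1 t2.
Definition tmax (t1 t2 : Tag) : Tag := if tag_lt t1 t2 then t2 else t1.
Definition tmin (t1 t2 : Tag) : Tag := if tag_lt t1 t2 then t1 else t2.
Definition t0 : Tag := (0, 0).

Section Protocol.
Variable E : eqType.   (* coded elements *)

(* signed triple (<t, e>, sigma): tag, coded element, signer identity.
   Signatures are unforgeable: a triple "verifies" iff it was actually
   signed (created) by a process following the protocol; the global log
   [signed] below records all such triples. *)
Definition Entry := (Tag * E * nat)%type.
Definition etag (e : Entry) : Tag := e.1.1.
Definition eelt (e : Entry) : E := e.1.2.

Variable n : nat.      (* |C|, flexnodes are 'I_n *)

Inductive Msg :=
  (* client -> flexnode (client id, operation number, destination) *)
  | MQTag  of nat & nat & 'I_n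
  | MQData of nat & nat & 'I_n
  | MPut   of nat & nat & 'I_n & Entry
  (* flexnode -> client (source, client id, operation number, payload) *)
  | MRTag  of 'I_n & nat & nat & Entry
  | MRData of 'I_n & nat & nat & seq Entry
  | MAck   of 'I_n & nat & nat.

Variable V : eqType.

Inductive CState :=
  | Idle
  | RGet of seq ('I_n * seq Entry)   (* read, get-data phase: lists received *)
  | RPut of Tag & V & seq 'I_n       (* read, put-data phase: acks received *)
  | RDone of Tag & V                 (* read ready to return <t,v> *)
  | WGet of V & seq ('I_n * Entry)   (* write, get-tag phase *)
  | WPut of seq 'I_n                 (* write, put-data phase *)
  | WDone.

Inductive Action :=
  | InvRead of nat
  | InvWrite of nat & V
  | RespRead of nat & Tag & V
  | RespWrite of nat
  | Deliver of nat                   (* deliver the idx-th in-transit message *)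
  (* arbitrary messages sent by a Byzantine flexnode (only verified
     signed pairs can be produced, signatures being unforgeable) *)
  | ByzTag of 'I_n & nat & nat & Entry
  | ByzData of 'I_n & nat & nat & seq Entry
  | ByzAck of 'I_n & nat & nat.

Record State := mkState {
  lists  : 'I_n -> seq Entry;
  net    : seq Msg;
  signed : seq Entry;                (* all signed triples created so far *)
  cst    : nat -> CState;
  ocnt   : nat -> nat
}.

Variables (k delta : nat).
Variable enc : V -> 'I_n -> E.       (* Encode(v) = (enc v j)_j *)
Variable dec : seq E -> V.
Variable v0 : V.
Variable B : {set 'I_n}.             (* Byzantine flexnodes *)

(* quorum size ceil((2|C| + k)/3) *)
Definition quorum : nat := (2 * n + k + 2) %/ 3.

Definition max_entry (L : seq Entry) : option Entry :=
  foldr (fun e o => match o with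
                    | None => Some e
                    | Some e' => Some (if tag_lt (etag e') (etag e) then e else e')
                    end) None L.

Definition min_tag (L : seq Entry) : Tag :=
  foldr (fun e t => tmin (etag e) t)
        (match L with [::] => t0 | e :: _ => etag e end) L.

(* receiver side of put-data *)
Definition store (S : seq Entry) (L : seq Entry) (e : Entry) : seq Entry :=
  let L' := if (e \in S) && all (fun x => etag x != etag e) L
            then rcons L e else L in
  if delta.+1 < size L' then [seq x <- L' | etag x != min_tag L'] else L'.

Definition cand (rs : seq ('I_n * seq Entry)) : seq Tag :=
  [seq t <- flatten [seq map etag p.2 | p <- rs]
     | k <= count (fun p => t \in map etag p.2) rs].
Definition best (rs : seq ('I_n * seq Entry)) : option Tag :=
  foldr (fun t o => Some (match o with None => t | Some t' => tmax t t' end))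
        None (cand rs).
Definition elems (t : Tag) (rs : seq ('I_n * seq Entry)) : seq E :=
  pmap (fun p => ohead [seq eelt e | e <- p.2 & etag e == t]) rs.

Definition upd {A : Type} (f : nat -> A) (c : nat) (a : A) : nat -> A :=
  fun c' => if c' == c then a else f c'.

Definition send (s : State) (ms : seq Msg) : State :=
  mkState (lists s) (net s ++ ms) (signed s) (cst s) (ocnt s).
Definition setc (s : State) (c : nat) (x : CState) : State :=
  mkState (lists s) (net s) (signed s) (upd (cst s) c x) (ocnt s).
Definition setlist (s : State) (j : 'I_n) (L : seq Entry) : State :=
  mkState (fun j' => if j' == j then L else lists s j') (net s) (signed s)
          (cst s) (ocnt s).

Definition put_data (s : State) (c o : nat) (t : Tag) (v : V) : State :=
  let es := [seq (t, enc v j, c) | j <- enum 'I_n] in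
  mkState (lists s)
          (net s ++ [seq MPut c o j (t, enc v j, c) | j <- enum 'I_n])
          (signed s ++ es) (cst s) (ocnt s).

Definition client_tag (s : State) (c o : nat) (j : 'I_n) (e : Entry) : State :=
  match cst s c with
  | WGet v rs =>
      if (j \notin map fst rs) && (size rs < quorum) && (e \in signed s) then
        let rs' := rcons rs (j, e) in
        if size rs' == quorum then
          let tm := foldr tmax t0 [seq etag p.2 | p <- rs'] in
          put_data (setc s c (WPut [::])) c o (tm.1.+1, c) v
        else setc s c (WGet v rs')
      else s
  | _ => s
  end.

Definition client_data (s : State) (c o : nat) (j : 'I_n) (L : seq Entry) : State :=
  match cst s c with
  | RGet rs =>
      if (j \notin map fst rs) && (size rs < quorum) then
        let rs' := rcons rs (j, [seq e <- L | e \in signed s]) in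
        if size rs' == quorum then
          match best rs' with
          | Some t => let v := dec (elems t rs') in
                      put_data (setc s c (RPut t v [::])) c o t v
          | None => setc s c (RGet rs')   (* get-data does not complete *)
          end
        else setc s c (RGet rs')
      else s
  | _ => s
  end.

Definition client_ack (s : State) (c : nat) (j : 'I_n) : State :=
  match cst s c with
  | RPut t v acks =>
      if (j \notin acks) && (size acks < quorum) then
        let acks' := rcons acks j in
        if size acks' == quorum then setc s c (RDone t v)
        else setc s c (RPut t v acks')
      else s
  | WPut acks =>
      if (j \notin acks) && (size acks < quorum) then
        let acks' := rcons acks j in
        if size acks' == quorum then setc s c WDone
        else setc s c (WPut acks')
      else s
  | _ => s
  end.

(* processing of a delivered message (already removed from the network);
   messages addressed to Byzantine flexnodes have no prescribed effect,
   replies to stale operations are ignored *)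
Definition deliver (s : State) (m : Msg) : State :=
  match m with
  | MQTag c o j =>
      if j \in B then s else
      match max_entry (lists s j) with
      | Some e => send s [:: MRTag j c o e]
      | None => s
      end
  | MQData c o j => if j \in B then s else send s [:: MRData j c o (lists s j)]
  | MPut c o j e =>
      if j \in B then s else
      send (setlist s j (store (signed s) (lists s j) e)) [:: MAck j c o]
  | MRTag j c o e => if o == ocnt s c then client_tag s c o j e else s
  | MRData j c o L => if o == ocnt s c then client_data s c o j L else s
  | MAck j c o => if o == ocnt s c then client_ack s c j else s
  end.

Definition step (s : State) (a : Action) : option State :=
  match a with
  | InvRead c =>
      match cst s c with
      | Idle => let o := (ocnt s c).+1 in
                Some (mkState (lists s) (net s ++ [seq MQData c o j | j <- enum 'I_n])
                              (signed s) (upd (cst s) c (RGet [::])) (upd (ocnt s) c o))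
      | _ => None
      end
  | InvWrite c v =>
      match cst s c with
      | Idle => let o := (ocnt s c).+1 in
                Some (mkState (lists s) (net s ++ [seq MQTag c o j | j <- enum 'I_n])
                              (signed s) (upd (cst s) c (WGet v [::])) (upd (ocnt s) c o))
      | _ => None
      end
  | RespRead c t v =>
      match cst s c with
      | RDone t' v' => if (t' == t) && (v' == v) then Some (setc s c Idle) else None
      | _ => None
      end
  | RespWrite c =>
      match cst s c with
      | WDone => Some (setc s c Idle)
      | _ => None
      end
  | Deliver idx =>
      match onth (net s) idx with
      | Some m => Some (deliver (mkState (lists s) (take idx (net s) ++ drop idx.+1 (net s))
                                         (signed s) (cst s) (ocnt s)) m)
      | None => None
      end
  | ByzTag j c o e =>
      if (j \in B) && (e \in signed s) then Some (send s [:: MRTag j c o e]) else None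
  | ByzData j c o L =>
      if (j \in B) && all (fun e => e \in signed s) L
      then Some (send s [:: MRData j c o L]) else None
  | ByzAck j c o =>
      if j \in B then Some (send s [:: MAck j c o]) else None
  end.

Definition init_entries : seq Entry := [seq (t0, enc v0 j, 0) | j <- enum 'I_n].
Definition init : State :=
  mkState (fun j => [:: (t0, enc v0 j, 0)]) [::] init_entries (fun _ => Idle) (fun _ => 0).

Definition run (tr : seq Action) : option State :=
  foldl (fun os a => obind (fun s => step s a) os) (Some init) tr.

Definition execution (tr : seq Action) : bool := isSome (run tr).

Definition dflt : Action := Deliver 0.
Definition is_resp_by (c : nat) (a : Action) : bool :=
  match a with RespRead c' _ _ | RespWrite c' => c' == c | _ => false end.
(* index of the response of the operation of c invoked at index i
   (= size tr if the operation is not complete) *)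
Definition resp_idx (tr : seq Action) (c i : nat) : nat :=
  i.+1 + find (is_resp_by c) (drop i.+1 tr).

Definition complete_read (tr : seq Action) (c i j : nat) (t : Tag) (v : V) : Prop :=
  [/\ nth dflt tr i = InvRead c, j = resp_idx tr c i & nth dflt tr j = RespRead c t v].

Definition writes_concurrent (tr : seq Action) (c i : nat) : nat :=
  count (fun j => match nth dflt tr j with
                  | InvWrite c' _ => (j < resp_idx tr c i) && (i < resp_idx tr c' j)
                  | _ => false
                  end) (iota 0 (size tr)).

End Protocol.

Arguments Idle {E n V}.
Arguments WDone {E n V}.
Arguments InvRead {E n V} _.
Arguments InvWrite {E n V} _ _.
Arguments RespRead {E n V} _ _ _.
Arguments RespWrite {E n V} _.
Arguments Deliver {E n V} _.
Arguments dflt {E n V}.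

From mathcomp Require Import all_boot zify.
From Stdlib Require Import Classical_Prop.

(* Once an honest flexnode has stored a tag t, its List keeps t until delta+1
   larger tags have entered it ([covers]).  A read returning t1, and likewise a
   completed write, leaves its tag covered at a whole quorum.  Let tm be the
   largest tag covered at a quorum when the second read starts.  A larger tag
   seen during that read belongs to a write that had not completed before the
   read started, i.e. to one of the at most delta concurrent writes; hence the
   honest members of tm's quorum really hold tm throughout the read.  Its
   get-data quorum meets that quorum in at least k honest flexnodes (this is
   where 3b < |C| - k enters), so tm appears in k replies and the read returns
   a tag at least tm >= t1. *)

Set Implicit Arguments. Unset Strict Implicit. Unset Printing Implicit Defensive.

Arguments RGet {E n V} _.
Arguments RPut {E n V} _ _ _.
Arguments RDone {E n V} _ _.
Arguments WGet {E n V} _ _.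
Arguments WPut {E n V} _.
Arguments MQTag {E n} _ _ _.
Arguments MQData {E n} _ _ _.
Arguments MPut {E n} _ _ _ _.
Arguments MRTag {E n} _ _ _ _.
Arguments MRData {E n} _ _ _ _.
Arguments MAck {E n} _ _ _.
Arguments ByzTag {E n V} _ _ _ _.
Arguments ByzData {E n V} _ _ _ _.
Arguments ByzAck {E n V} _ _ _.
Arguments mkState {E n V} _ _ _ _ _.

(** * Tags *)

Lemma tag_ltxx t : tag_lt t t = false.
Proof. case: t => a b; rewrite /tag_lt /=; lia. Qed.

Lemma tag_lexx t : tag_le t t.
Proof. by rewrite /tag_le eqxx. Qed.

Lemma tag_ltW a b : tag_lt a b -> tag_le a b.
Proof. by rewrite /tag_le => ->; rewrite orbT. Qed.

Lemma tag_ltNge a b : tag_lt a b = ~~ tag_le b a.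
Proof. case: a b => [a1 a2] [b1 b2]; rewrite /tag_le /tag_lt /= !xpair_eqE; lia. Qed.

Lemma tag_le_trans a b c : tag_le a b -> tag_le b c -> tag_le a c.
Proof.
case: a b c => [a1 a2] [b1 b2] [c1 c2]; rewrite /tag_le /tag_lt /= !xpair_eqE; lia.
Qed.

Lemma tag_lt_le_trans a b c : tag_lt a b -> tag_le b c -> tag_lt a c.
Proof.
case: a b c => [a1 a2] [b1 b2] [c1 c2]; rewrite /tag_le /tag_lt /= !xpair_eqE; lia.
Qed.

Lemma tag_lt_neq_t0 a b : tag_lt a b -> b != t0.
Proof. case: a b => [a1 a2] [b1 b2]; rewrite /tag_lt /t0 /= xpair_eqE; lia. Qed.

Lemma tag_le_tmaxl a b : tag_le a (tmax a b).
Proof. by rewrite /tmax; case: ifP => [/tag_ltW|_] //; apply: tag_lexx. Qed.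

Lemma tag_le_tmaxr a b : tag_le b (tmax a b).
Proof.
rewrite /tmax; case: ifP => [_|]; first exact: tag_lexx.
by rewrite tag_ltNge => /negbFE.
Qed.

Lemma tminP a b : tmin a b = a \/ tmin a b = b.
Proof. by rewrite /tmin; case: ifP; auto. Qed.

Lemma tag_le_tminl a b : tag_le (tmin a b) a.
Proof.
rewrite /tmin; case: ifP => [_|]; first exact: tag_lexx.
by rewrite tag_ltNge => /negbFE.
Qed.

Lemma tag_le_tminr a b : tag_le (tmin a b) b.
Proof. by rewrite /tmin; case: ifP => [/tag_ltW|_] //; apply: tag_lexx. Qed.

Lemma exists_tag_max (P : Tag -> Prop) (l : seq Tag) :
  (exists2 x, x \in l & P x) ->
  exists m, [/\ m \in l, P m & forall y, y \in l -> P y -> tag_le y m].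
Proof.
elim: l => [[x //]|y l IH] Hx.
case: (classic (exists2 x, x \in l & P x)) => [Hl|Nl].
  case: (IH Hl) => m [ml Pm Mx].
  case: (classic (P y /\ tag_lt m y)) => [[Py lt]|N].
    exists y; split => //; first exact: mem_head.
    move=> z; rewrite inE => /orP [/eqP -> _|zl Pz]; first exact: tag_lexx.
    exact: tag_le_trans (Mx z zl Pz) (tag_ltW lt).
  exists m; split => //; first by rewrite inE ml orbT.
  move=> z; rewrite inE => /orP [/eqP -> Pz|zl Pz]; last exact: Mx.
  have : ~~ tag_lt m y by apply/negP => lt; apply: N.
  by rewrite tag_ltNge negbK.
case: Hx => x; rewrite inE => /orP [/eqP -> Py|xl Px]; last by case: Nl; exists x.
exists y; split => //; first exact: mem_head.
move=> z; rewrite inE => /orP [/eqP -> _|zl Pz]; first exact: tag_lexx.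
by case: Nl; exists z.
Qed.

(** * Lists of flexnodes *)

Section Store.
Variable E : eqType.
Variable delta : nat.
Local Notation Entry := (Entry E).

(* The form in which a stored tag survives [store]: pruning drops only the
   minimum tag, so [t] can leave [L] only once delta+1 larger tags are in. *)
Definition covers (t : Tag) (L : seq Entry) : bool :=
  (t \in map (@etag E) L) || (delta.+1 <= count (fun x => tag_lt t (etag x)) L).

Lemma foldr_tmin_in (L : seq Entry) z :
  let m := foldr (fun e t => tmin (etag e) t) z L in
  (m == z) || (m \in map (@etag E) L).
Proof.
elim: L => [|e L IH] /=; first by rewrite eqxx.
case: (tminP (etag e) (foldr (fun e t => tmin (etag e) t) z L)) => ->.
  by rewrite inE eqxx orbT.
case/orP: IH => H; first by rewrite H.
by rewrite in_cons H !orbT.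
Qed.

Lemma foldr_tmin_le (L : seq Entry) z :
  let m := foldr (fun e t => tmin (etag e) t) z L in
  tag_le m z /\ forall x, x \in L -> tag_le m (etag x).
Proof.
elim: L => [|e L [IH1 IH2]] /=; first by split=> //; exact: tag_lexx.
split; first exact: tag_le_trans (tag_le_tminr _ _) IH1.
move=> x; rewrite inE => /orP [/eqP ->|xL]; first exact: tag_le_tminl.
exact: tag_le_trans (tag_le_tminr _ _) (IH2 _ xL).
Qed.

Lemma min_tag_mem (L : seq Entry) : L != [::] -> min_tag L \in map (@etag E) L.
Proof.
case: L => [//|e L] _; rewrite /min_tag.
case/orP: (foldr_tmin_in (e :: L) (etag e)) => [/eqP ->|//].
by rewrite inE eqxx.
Qed.

Lemma min_tag_le (L : seq Entry) x : x \in L -> tag_le (min_tag L) (etag x).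
Proof. rewrite /min_tag; case: L => [//|e L] xL; exact: (foldr_tmin_le (e :: L) (etag e)).2. Qed.

Lemma count_tag_uniq (L : seq Entry) m :
  uniq (map (@etag E) L) -> m \in map (@etag E) L ->
  count (fun x => etag x == m) L = 1.
Proof.
move=> U M.
have -> : count (fun x => etag x == m) L = count_mem m (map (@etag E) L).
  by rewrite count_map; apply: eq_count => x /=; rewrite eq_sym.
by rewrite count_uniq_mem // M.
Qed.

Lemma size_filter_min (L : seq Entry) :
  uniq (map (@etag E) L) -> L != [::] ->
  size [seq x <- L | etag x != min_tag L] = (size L).-1.
Proof.
move=> U N.
have := count_tag_uniq U (min_tag_mem N).
have := count_predC (fun x => etag x == min_tag L) L.
rewrite size_filter.
have -> : count (fun x => etag x != min_tag L) L = count (predC (fun x => etag x == min_tag L)) L by [].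
lia.
Qed.

Lemma covers_drop_min (L : seq Entry) t :
  uniq (map (@etag E) L) -> delta.+1 < size L -> covers t L ->
  covers t [seq x <- L | etag x != min_tag L].
Proof.
move=> U S C.
have N : L != [::] by case: (L) S.
have SF := size_filter_min U N.
case/orP: C => [tin|cnt].
  case: (eqVneq t (min_tag L)) => [Et|Nt].
    apply/orP; right.
    rewrite count_filter.
    have -> : count (predI (fun x => tag_lt t (etag x)) (fun x => etag x != min_tag L)) L
           = count (fun x => etag x != min_tag L) L.
      apply: eq_in_count => x xL /=.
      have := min_tag_le xL; rewrite -Et /tag_le.
      case: (eqVneq t (etag x)) => [->|ne] /=; first by rewrite tag_ltxx.
      by move=> ->.
    by rewrite -size_filter SF; case: (size L) S => //= ? ?; lia.
  apply/orP; left.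
  move: tin => /mapP [x xL Ex]; subst t.
  by apply/mapP; exists x => //; rewrite mem_filter xL andbT.
apply/orP; right.
case: (boolP (tag_lt t (min_tag L))) => lt.
  rewrite count_filter.
  have -> : count (predI (fun x => tag_lt t (etag x)) (fun x => etag x != min_tag L)) L
         = count (fun x => etag x != min_tag L) L.
    apply: eq_in_count => x xL /=.
    by rewrite (tag_lt_le_trans lt (min_tag_le xL)).
  by rewrite -size_filter SF; case: (size L) S => //= ? ?; lia.
rewrite count_filter.
have -> : count (predI (fun x => tag_lt t (etag x)) (fun x => etag x != min_tag L)) L
       = count (fun x => tag_lt t (etag x)) L; last by [].
apply: eq_count => x /=.
case: (boolP (tag_lt t (etag x))) => //= h.
apply/eqP => Ex; move: lt; rewrite -Ex h //.
Qed.

Definition store_insert (S L : seq Entry) (e : Entry) :=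
  if (e \in S) && all (fun x => etag x != etag e) L then rcons L e else L.

Lemma storeE S L e : store delta S L e =
  if delta.+1 < size (store_insert S L e) then [seq x <- store_insert S L e | etag x != min_tag (store_insert S L e)]
  else store_insert S L e.
Proof. by []. Qed.

Lemma store_insert_uniq S L e : uniq (map (@etag E) L) -> uniq (map (@etag E) (store_insert S L e)).
Proof.
rewrite /store_insert; case: ifP => // /andP [_ A] U.
rewrite map_rcons rcons_uniq U andbT.
apply/mapP => [[x xL Ex]]; move/allP: A => /(_ x xL); by rewrite Ex eqxx.
Qed.

Lemma store_insert_size S L e : size (store_insert S L e) <= (size L).+1.
Proof. by rewrite /store_insert; case: ifP; rewrite ?size_rcons. Qed.

Lemma store_insert_sub S L e : {subset L <= S} -> {subset store_insert S L e <= S}.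
Proof.
rewrite /store_insert; case: ifP => // /andP [eS _] H x; rewrite mem_rcons inE => /orP [/eqP ->//|]; exact: H.
Qed.

Lemma store_insert_covers S L e t : covers t L -> covers t (store_insert S L e).
Proof.
rewrite /store_insert; case: ifP => // _; rewrite /covers map_rcons mem_rcons inE -cats1 count_cat.
case/orP => [->|H]; first by rewrite orbT.
by apply/orP; right; apply: leq_trans H (leq_addr _ _).
Qed.

Lemma store_insert_new S L e : e \in S -> etag e \in map (@etag E) (store_insert S L e).
Proof.
rewrite /store_insert => eS; rewrite eS /=; case: ifP => A.
  by rewrite map_rcons mem_rcons inE eqxx.
move/negbT: A; rewrite -has_predC => /hasP [x xL /= /negbNE /eqP Ex].
by apply/mapP; exists x.
Qed.

Lemma store_wf S L e :
  uniq (map (@etag E) L) -> size L <= delta.+1 -> {subset L <= S} ->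
  [/\ uniq (map (@etag E) (store delta S L e)), size (store delta S L e) <= delta.+1
    & {subset store delta S L e <= S}].
Proof.
move=> U Sz Sb.
have U' := store_insert_uniq S e U; have Sz' := store_insert_size S L e; have Sb' := @store_insert_sub S L e Sb.
rewrite storeE; case: ifP => H; last by split => //; lia.
split; last by move=> x; rewrite mem_filter => /andP [_ /Sb'].
- exact: subseq_uniq (map_subseq _ (filter_subseq _ _)) U'.
- have N : store_insert S L e != [::] by case: (store_insert S L e) H.
  rewrite (size_filter_min U' N); lia.
Qed.

Lemma store_covers S L e t : uniq (map (@etag E) L) -> covers t L -> covers t (store delta S L e).
Proof.
move=> U C; have U' := store_insert_uniq S e U; have C' := store_insert_covers S e C.
by rewrite storeE; case: ifP => // H; apply: covers_drop_min.
Qed.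

Lemma store_covers_new S L e : uniq (map (@etag E) L) -> e \in S -> covers (etag e) (store delta S L e).
Proof.
move=> U eS; have U' := store_insert_uniq S e U.
have C' : covers (etag e) (store_insert S L e) by rewrite /covers store_insert_new.
by rewrite storeE; case: ifP => // H; apply: covers_drop_min.
Qed.

End Store.

(** * The protocol invariant *)

Section Invariant.
Variables (E V : eqType) (n k delta : nat).
Variable B : {set 'I_n}.

Local Notation St := (State E n V).
Local Notation Entry := (Entry E).
Local Notation covers := (covers delta).
Local Notation q := (quorum n k).
Definition honest (j : 'I_n) := j \notin B.

Definition write_tag (rs : seq ('I_n * Entry)) (c : nat) : Tag :=
  ((foldr tmax t0 [seq etag p.2 | p <- rs]).1.+1, c).

(* Ghost state: [g c] is the tag of the write of client [c] that is under way,
   fixed when its get-tag phase completes. *)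
Definition wtags_deliver (g : nat -> Tag) (s : St) (m : Msg E n) : nat -> Tag :=
  match m with
  | MRTag j c o e => if cst s c is WGet v rs then upd g c (write_tag (rcons rs (j, e)) c) else g
  | _ => g end.

Definition wtags_step (g : nat -> Tag) (s : St) (a : Action E n V) : nat -> Tag :=
  if a is Deliver idx then
    if onth (net s) idx is Some m then wtags_deliver g s m else g
  else g.

Definition put_ok (s : St) (g : nat -> Tag) c t :=
  match cst s c with
  | RPut t' _ _ | RDone t' _ => t = t'
  | WPut _ | WDone => t = g c
  | Idle => True
  | _ => False end.

Definition ack_ok (s : St) (g : nat -> Tag) c j :=
  match cst s c with
  | RPut t _ _ => covers t (lists s j)
  | WPut _ => covers (g c) (lists s j)
  | RGet _ | WGet _ _ => False
  | _ => True end.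

Definition msg_ok (s : St) g (m : Msg E n) :=
  match m with
  | MQData c o j => o <= ocnt s c
  | MPut c o j e => [/\ e \in signed s, o <= ocnt s c & (o = ocnt s c -> put_ok s g c (etag e))]
  | MAck j c o => honest j -> o <= ocnt s c /\ (o = ocnt s c -> ack_ok s g c j)
  | MRData j c o L => honest j -> o <= ocnt s c /\ {subset L <= signed s}
  | _ => True end.

Definition quorum_covers (s : St) t := exists A : seq 'I_n,
  [/\ uniq A, size A = q & forall j, j \in A -> honest j -> covers t (lists s j)].

Definition client_ok (s : St) g c :=
  match cst s c with
  | RGet rs => uniq (map fst rs) /\ (forall p, p \in rs -> {subset p.2 <= signed s})
  | RPut t _ acks => uniq acks /\ (forall j, j \in acks -> honest j -> covers t (lists s j))
  | RDone t _ => quorum_covers s t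
  | WPut acks => [/\ uniq acks, (forall j, j \in acks -> honest j -> covers (g c) (lists s j)),
                  g c \in map (@etag E) (signed s) & (g c).2 = c]
  | WDone => [/\ quorum_covers s (g c), g c \in map (@etag E) (signed s) & (g c).2 = c]
  | _ => True end.

Definition lists_ok (s : St) := forall j,
  [/\ uniq (map (@etag E) (lists s j)), size (lists s j) <= delta.+1 & {subset lists s j <= signed s}].

Definition proto_inv (s : St) g :=
  [/\ lists_ok s, (forall m, List.In m (net s) -> msg_ok s g m) & (forall c, client_ok s g c)].

Definition msg_client (m : Msg E n) :=
  match m with
  | MQTag c _ _ | MQData c _ _ | MPut c _ _ _ => c
  | MRTag _ c _ _ | MRData _ c _ _ | MAck _ c _ => c end.

Definition covers_mono (s s' : St) := forall j t, covers t (lists s j) -> covers t (lists s' j).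

Lemma quorum_covers_mono s s' t : covers_mono s s' -> quorum_covers s t -> quorum_covers s' t.
Proof. move=> M [A [U S H]]; exists A; split => // j jA hj; exact: M (H j jA hj). Qed.

Lemma client_ok_ext (s s' : St) g g' c :
  covers_mono s s' -> {subset signed s <= signed s'} ->
  cst s' c = cst s c -> g' c = g c ->
  client_ok s g c -> client_ok s' g' c.
Proof.
move=> M Sg Ec Eg; rewrite /client_ok Ec Eg.
case: (cst s c) => //.
- by move=> rs [U H]; split => // p /H Hp x /Hp; apply: Sg.
- by move=> t v acks [U H]; split => // j jA hj; apply: M; apply: H.
- by move=> t v; apply: quorum_covers_mono.
- by move=> acks [U H gS g2]; split => //; [move=> j jA hj; apply: M; apply: H | exact: sub_map Sg _ gS].
- by case => C gS g2; split => //; [apply: quorum_covers_mono C | exact: sub_map Sg _ gS].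
Qed.

(* Either the operation of [c] goes on with its put/ack obligations preserved,
   or a new one starts, which makes the messages of the old one stale. *)
Definition client_progress (s s' : St) g g' c :=
  (ocnt s' c = ocnt s c /\ (forall t, put_ok s g c t -> put_ok s' g' c t) /\
     (forall j, honest j -> ack_ok s g c j -> ack_ok s' g' c j))
  \/ (cst s c = Idle /\ ocnt s' c = (ocnt s c).+1).

Lemma msg_ok_progress (s s' : St) g g' m :
  {subset signed s <= signed s'} -> client_progress s s' g g' (msg_client m) ->
  msg_ok s g m -> msg_ok s' g' m.
Proof.
move=> Sg; case: m => [c o j|c o j|c o j e|j c o e|j c o L|j c o] /= C //=.
- by case: C => [[-> _]|[_ ->]] //; lia.
- case=> eS oo H; split; first exact: Sg.
  + by case: C => [[-> _]|[_ ->]] //; lia.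
  + case: C => [[-> [P _]] Eo|[_ ->] Eo]; first by apply: P; apply: H.
    lia.
- move=> H hj; case: (H hj) => oo H2; split; first by case: C => [[-> _]|[_ ->]] //; lia.
  by move=> x /H2; apply: Sg.
- move=> H hj; case: (H hj) => oo H2; split.
  + by case: C => [[-> _]|[_ ->]] //; lia.
  + case: C => [[-> [_ P]] Eo|[_ ->] Eo]; first by apply: P => //; apply: H2.
    lia.
Qed.

Lemma client_progress_same (s s' : St) g g' c :
  covers_mono s s' -> cst s' c = cst s c -> ocnt s' c = ocnt s c -> g' c = g c ->
  client_progress s s' g g' c.
Proof.
move=> M Ec Eo Eg; left; split => //; split.
- by move=> t; rewrite /put_ok Ec Eg.
- move=> j hj; rewrite /ack_ok Ec Eg; case: (cst s c) => // *; exact: M.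
Qed.

Lemma client_progress_get (s s' : St) g g' c :
  ocnt s' c = ocnt s c -> (exists rs, cst s c = RGet rs) \/ (exists v rs, cst s c = WGet v rs) ->
  client_progress s s' g g' c.
Proof.
move=> Eo H; left; split => //.
by rewrite /put_ok /ack_ok; case: H => [[rs ->]|[v [rs ->]]].
Qed.

Lemma proto_inv_update (s s' : St) g g' :
  proto_inv s g ->
  lists_ok s' -> {subset signed s <= signed s'} ->
  (forall m, List.In m (net s') -> List.In m (net s) \/ msg_ok s' g' m) ->
  (forall c, client_progress s s' g g' c) ->
  (forall c, client_ok s' g' c) ->
  proto_inv s' g'.
Proof.
move=> [L M C] L' Sg N CC CL; split => // m /N [/M H|//].
exact: msg_ok_progress (CC _) H.
Qed.

Lemma In_take_drop (T : Type) (x : T) i (l : seq T) :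
  List.In x (take i l ++ drop i.+1 l) -> List.In x l.
Proof.
elim: l i => [|y l IH] [|i] /= H //; first by right; rewrite drop0 in H.
by case: H => [->|/IH]; [left|right].
Qed.

Lemma In_onth (T : Type) (x : T) i (l : seq T) : onth l i = Some x -> List.In x l.
Proof.
elim: l i => [|y l IH] [|i] /= H //; first by case: H => ->; left.
by right; apply: IH H.
Qed.

Lemma In_map_enum (T : Type) (x : T) (f : 'I_n -> T) :
  List.In x [seq f j | j <- enum 'I_n] -> exists j, x = f j.
Proof. by move/List.in_map_iff => [j [<- _]]; exists j. Qed.

Lemma lists_ok_signed (s s' : St) : lists s' = lists s -> {subset signed s <= signed s'} -> lists_ok s -> lists_ok s'.
Proof. move=> El Sg L j; rewrite El; case: (L j) => U Sz Sb; split => // x /Sb; exact: Sg. Qed.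

Lemma covers_mono_lists (s s' : St) : lists s' = lists s -> covers_mono s s'.
Proof. by move=> El j t; rewrite El. Qed.

End Invariant.

Section Preservation.
Variables (E V : eqType) (n k delta : nat).
Variables (enc : V -> 'I_n -> E) (dec : seq E -> V) (v0 : V) (B : {set 'I_n}).
Hypothesis n_pos : 0 < n.

Local Notation St := (State E n V).
Local Notation Entry := (Entry E).
Local Notation covers := (covers delta).
Local Notation q := (quorum n k).
Local Notation proto_inv := (proto_inv k delta B).
Local Notation msg_ok := (msg_ok delta B).
Local Notation client_ok := (client_ok k delta B).
Local Notation put_ok := (put_ok (E:=E) (n:=n) (V:=V)).
Local Notation ack_ok := (ack_ok delta).
Local Notation honest := (honest B).

Lemma updE A (f : nat -> A) c a c' : upd f c a c' = if c' == c then a else f c'.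
Proof. by []. Qed.

Lemma upd_same A (f : nat -> A) c a : upd f c a c = a.
Proof. by rewrite updE eqxx. Qed.

Lemma upd_other A (f : nat -> A) c a c' : c' != c -> upd f c a c' = f c'.
Proof. by rewrite updE => /negbTE ->. Qed.

Lemma proto_inv_send (s : St) g ms :
  proto_inv s g -> (forall m, List.In m ms -> msg_ok s g m) -> proto_inv (send s ms) g.
Proof.
move=> [L M C] H; split => // m Hm; case: (List.in_app_or _ _ _ Hm) => [/M|/H] //.
Qed.

Lemma proto_inv_remove (s : St) g idx :
  proto_inv s g -> proto_inv (mkState (lists s) (take idx (net s) ++ drop idx.+1 (net s)) (signed s) (cst s) (ocnt s)) g.
Proof. by move=> [L M C]; split => // m Hm; apply: M; apply: In_take_drop Hm. Qed.

Lemma proto_inv_local (s s' : St) g g' c :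
  proto_inv s g ->
  lists s' = lists s -> {subset signed s <= signed s'} ->
  (forall m, List.In m (net s') -> List.In m (net s) \/ msg_ok s' g' m) ->
  (forall c', c' != c -> cst s' c' = cst s c' /\ ocnt s' c' = ocnt s c' /\ g' c' = g c') ->
  client_progress delta B s s' g g' c -> client_ok s' g' c ->
  proto_inv s' g'.
Proof.
move=> I El Sg N O Cc CLc; have [L M C] := I.
apply: (proto_inv_update I _ Sg N).
- exact: lists_ok_signed El Sg L.
- move=> c'; case: (eqVneq c' c) => [->//|ne].
  by case: (O c' ne) => [Ec [Eo Eg]]; apply: client_progress_same (covers_mono_lists El) Ec Eo Eg.
- move=> c'; case: (eqVneq c' c) => [->//|ne].
  by case: (O c' ne) => [Ec [Eo Eg]]; apply: client_ok_ext (covers_mono_lists El) Sg Ec Eg (C c').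
Qed.

Lemma proto_inv_wget_upd (s : St) g c v rs x :
  proto_inv s g -> cst s c = WGet v rs -> proto_inv s (upd g c x).
Proof.
move=> I Ec; apply: (proto_inv_local (c:=c) I) => //.
- by move=> m; left.
- by move=> c' ne; rewrite upd_other.
- by apply: client_progress_get => //; right; exists v, rs.
- by rewrite /client_ok Ec.
Qed.

Lemma proto_inv_setc_wget (s : St) g c v rs rs' x :
  proto_inv s g -> cst s c = WGet v rs -> proto_inv (setc s c (WGet v rs')) (upd g c x).
Proof.
move=> I Ec; apply: (proto_inv_local (c:=c) I) => //.
- by move=> m; left.
- by move=> c' ne; rewrite /setc /= !upd_other.
- by apply: client_progress_get => //; right; exists v, rs.
- by rewrite /client_ok /setc /= upd_same.
Qed.

Lemma proto_inv_setc_rget (s : St) g c rs (rs' : seq ('I_n * seq Entry)) :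
  proto_inv s g -> cst s c = RGet rs -> uniq (map fst rs') /\ (forall p, p \in rs' -> {subset p.2 <= signed s}) ->
  proto_inv (setc s c (RGet rs')) g.
Proof.
move=> I Ec U; apply: (proto_inv_local (c:=c) I) => //.
- by move=> m; left.
- by move=> c' ne; rewrite /setc /= !upd_other.
- by apply: client_progress_get => //; left; exists rs.
- by rewrite /client_ok /setc /= upd_same.
Qed.

Lemma mem_put_signed (s : St) c o t v j :
  (t, enc v j, c) \in signed (put_data enc s c o t v).
Proof. by rewrite /put_data /= mem_cat; apply/orP; right; apply: map_f; rewrite mem_enum. Qed.

Lemma put_tag_signed (s : St) c o t v :
  t \in map (@etag E) (signed (put_data enc s c o t v)).
Proof.
apply/mapP; exists (t, enc v (Ordinal n_pos), c) => //; exact: mem_put_signed.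
Qed.

Lemma proto_inv_wput (s : St) g c v rs o t v' :
  proto_inv s g -> cst s c = WGet v rs -> o = ocnt s c -> t.2 = c ->
  proto_inv (put_data enc (setc s c (WPut [::])) c o t v') (upd g c t).
Proof.
move=> I Ec Eo Et; apply: (proto_inv_local (c:=c) I) => //.
- by move=> x xs; rewrite /put_data /= mem_cat xs.
- move=> m Hm; case: (List.in_app_or _ _ _ Hm) => [|Hm']; first by left.
  case: (In_map_enum Hm') => j ->.
  right; rewrite /= /put_ok /= upd_same upd_same; split => //; last by rewrite Eo.
  exact: mem_put_signed.
- by move=> c' ne; rewrite /put_data /setc /= !upd_other.
- by apply: client_progress_get => //; right; exists v, rs.
- rewrite /client_ok /put_data /setc /= !upd_same; split => //.
  exact: (put_tag_signed (setc s c (WPut [::])) c o t v').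
Qed.

Lemma proto_inv_rput (s : St) g c rs o t v :
  proto_inv s g -> cst s c = RGet rs -> o = ocnt s c ->
  proto_inv (put_data enc (setc s c (RPut t v [::])) c o t v) g.
Proof.
move=> I Ec Eo; apply: (proto_inv_local (c:=c) I) => //.
- by move=> x xs; rewrite /put_data /= mem_cat xs.
- move=> m Hm; case: (List.in_app_or _ _ _ Hm) => [|Hm']; first by left.
  case: (In_map_enum Hm') => j ->.
  right; rewrite /= /put_ok /= upd_same; split => //; last by rewrite Eo.
  exact: mem_put_signed.
- by move=> c' ne; rewrite /put_data /setc /= !upd_other.
- by apply: client_progress_get => //; left; exists rs.
- by rewrite /client_ok /put_data /setc /= !upd_same.
Qed.

Lemma proto_inv_ack_read (s : St) g c t v acks j :
  proto_inv s g -> cst s c = RPut t v acks -> (honest j -> covers t (lists s j)) -> j \notin acks ->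
  proto_inv (if size (rcons acks j) == q then setc s c (RDone t v) else setc s c (RPut t v (rcons acks j))) g.
Proof.
rewrite (_ : (if _ then _ else _) = setc s c (if size (rcons acks j) == q then RDone t v else RPut t v (rcons acks j))); last by case: ifP.
move=> I Ec Hj nj; have [_ _ C] := I; move: (C c); rewrite /client_ok Ec => -[U H].
have U' : uniq (rcons acks j) by rewrite rcons_uniq nj U.
have H' : forall j', j' \in rcons acks j -> honest j' -> covers t (lists s j').
  by move=> j'; rewrite mem_rcons inE => /orP [/eqP ->|/H].
apply: (proto_inv_local (c:=c) I) => //.
- by move=> m; left.
- by move=> c' ne; rewrite /setc /= !upd_other.
- left; split => //; split.
  + by move=> t'; rewrite /put_ok /setc /= upd_same Ec; case: ifP.
  + by move=> j' hj; rewrite /ack_ok /setc /= upd_same Ec; case: ifP.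
- rewrite /client_ok /setc /= upd_same; case: ifP => [/eqP Sz|_]; last by split.
  by exists (rcons acks j); split.
Qed.

Lemma proto_inv_ack_write (s : St) g c acks j :
  proto_inv s g -> cst s c = WPut acks -> (honest j -> covers (g c) (lists s j)) -> j \notin acks ->
  proto_inv (if size (rcons acks j) == q then setc s c WDone else setc s c (WPut (rcons acks j))) g.
Proof.
rewrite (_ : (if _ then _ else _) = setc s c (if size (rcons acks j) == q then WDone else WPut (rcons acks j))); last by case: ifP.
move=> I Ec Hj nj; have [_ _ C] := I; move: (C c); rewrite /client_ok Ec => -[U H gS g2].
have U' : uniq (rcons acks j) by rewrite rcons_uniq nj U.
have H' : forall j', j' \in rcons acks j -> honest j' -> covers (g c) (lists s j').
  by move=> j'; rewrite mem_rcons inE => /orP [/eqP ->|/H].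
apply: (proto_inv_local (c:=c) I) => //.
- by move=> m; left.
- by move=> c' ne; rewrite /setc /= !upd_other.
- left; split => //; split.
  + by move=> t'; rewrite /put_ok /setc /= upd_same Ec; case: ifP.
  + by move=> j' hj; rewrite /ack_ok /setc /= upd_same Ec; case: ifP.
- rewrite /client_ok /setc /= upd_same; case: ifP => [/eqP Sz|_]; last by split.
  by split => //; exists (rcons acks j); split.
Qed.

Lemma proto_inv_store (s : St) g c o j e :
  proto_inv s g -> msg_ok s g (MPut c o j e) ->
  proto_inv (send (setlist s j (store delta (signed s) (lists s j) e)) [:: MAck j c o]) g.
Proof.
move=> I [eS oo Hput]; have [L M C] := I.
set s2 := setlist s j _.
have CM : covers_mono delta s s2.
  move=> j' t; rewrite /s2 /setlist /=; case: ifP => [/eqP Ej|//]; subst j'.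
  by case: (L j) => U _ _; apply: store_covers.
have I2 : proto_inv s2 g.
  apply: (proto_inv_update I) => //.
  - move=> j'; rewrite /s2 /setlist /=; case: ifP => [/eqP Ej|_]; last exact: L; subst j'.
    by case: (L j) => U Sz Sb; apply: store_wf.
  - by move=> m; left.
  - by move=> c'; apply: client_progress_same.
  - by move=> c'; apply: (client_ok_ext CM) => //; apply: C.
apply: proto_inv_send I2 _ => m [<-|//] hj; split => // Eo.
have := Hput Eo; rewrite /ack_ok /put_ok /s2 /setlist /= eqxx.
case: (L j) => U _ _.
case: (cst s c) => [|rs|t' v' a|t' v'|v' rs|a|] //= Ht.
- by rewrite -Ht; apply: store_covers_new.
- by rewrite -Ht; apply: store_covers_new.
Qed.

Lemma proto_inv_deliver (s : St) g m :
  proto_inv s g -> msg_ok s g m -> proto_inv (deliver k delta enc dec B s m) (wtags_deliver g s m).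
Proof.
move=> I; have [L M C] := I.
case: m => [c o j|c o j|c o j e|j c o e|j c o Ld|j c o] /= Hm.
- case: ifP => // _; case: (max_entry _) => // e.
  by apply: proto_inv_send I _ => ? [<-|].
- case: ifP => // hB; apply: proto_inv_send I _ => ? [<-|//] hj.
  by split => //; case: (L j).
- by case: ifP => // _; apply: proto_inv_store.
- case: ifP => [/eqP Eo|_]; last first.
    by case Ec: (cst s c) => //; apply: proto_inv_wget_upd Ec.
  rewrite /client_tag; case Ec: (cst s c) => [||||v rs||] //.
  case: ifP => [_|_]; last exact: proto_inv_wget_upd Ec.
  case: ifP => _; last exact: proto_inv_setc_wget Ec.
  by apply: proto_inv_wput Ec _ _.
- case: ifP => [/eqP Eo|//].
  rewrite /client_data; case Ec: (cst s c) => [|rs|||||] //.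
  case: ifP => [/andP [nj _]|//].
  have U : uniq (map fst (rcons rs (j, [seq e <- Ld | e \in signed s]))) /\
      (forall p, p \in rcons rs (j, [seq e <- Ld | e \in signed s]) -> {subset p.2 <= signed s}).
    move: (C c); rewrite /client_ok Ec map_rcons rcons_uniq nj => -[-> H]; split => // p.
    rewrite mem_rcons inE => /orP [/eqP -> x|/H //]; by rewrite mem_filter => /andP [].
  case: ifP => _; last exact: proto_inv_setc_rget Ec U.
  case: (best _) => [t|]; last exact: proto_inv_setc_rget Ec U.
  exact: proto_inv_rput Ec Eo.
- case: ifP => [/eqP Eo|//].
  rewrite /client_ack; case Ec: (cst s c) => [||t v acks|||acks|] //.
  + case: ifP => [/andP [nj _]|//]; apply: (proto_inv_ack_read I Ec _ nj) => hj.
    by case: (Hm hj) => _ /(_ Eo); rewrite /ack_ok Ec.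
  + case: ifP => [/andP [nj _]|//]; apply: (proto_inv_ack_write I Ec _ nj) => hj.
    by case: (Hm hj) => _ /(_ Eo); rewrite /ack_ok Ec.
Qed.

Lemma proto_inv_step (s s' : St) g a :
  proto_inv s g -> step k delta enc dec B s a = Some s' -> proto_inv s' (wtags_step g s a).
Proof.
move=> I; have [L M C] := I.
case: a => [c|c v|c t v|c|idx|j c o e|j c o Ld|j c o] /=.
- case Ec: (cst s c) => // -[<-].
  apply: (proto_inv_local (c:=c) I) => //.
  + move=> m Hm; case: (List.in_app_or _ _ _ Hm) => [|Hm']; first by left.
    by case: (In_map_enum Hm') => j ->; right; rewrite /= ?upd_same ?eqxx.
  + by move=> c' ne; rewrite /= !upd_other.
  + by right; rewrite /= ?upd_same ?eqxx.
  + by rewrite /client_ok /= ?upd_same ?eqxx.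
- case Ec: (cst s c) => // -[<-].
  apply: (proto_inv_local (c:=c) I) => //.
  + move=> m Hm; case: (List.in_app_or _ _ _ Hm) => [|Hm']; first by left.
    by case: (In_map_enum Hm') => j ->; right; rewrite /= ?upd_same ?eqxx.
  + by move=> c' ne; rewrite /= !upd_other.
  + by right; rewrite /= ?upd_same ?eqxx.
  + by rewrite /client_ok /= ?upd_same ?eqxx.
- case Ec: (cst s c) => [||||||] //; case: ifP => // _ [<-].
  apply: (proto_inv_local (c:=c) I) => //.
  + by move=> m; left.
  + by move=> c' ne; rewrite /setc /= !upd_other.
  + by left; split => //; split; [move=> ?|move=> ? ?]; rewrite /put_ok /ack_ok /setc /= upd_same.
  + by rewrite /client_ok /setc /= upd_same.
- case Ec: (cst s c) => [||||||] // [<-].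
  apply: (proto_inv_local (c:=c) I) => //.
  + by move=> m; left.
  + by move=> c' ne; rewrite /setc /= !upd_other.
  + by left; split => //; split; [move=> ?|move=> ? ?]; rewrite /put_ok /ack_ok /setc /= upd_same.
  + by rewrite /client_ok /setc /= upd_same.
- case Hon: (onth (net s) idx) => [m|//] [<-].
  have I1 := proto_inv_remove idx I.
  have Hm : msg_ok s g m by apply: M; apply: In_onth Hon.
  exact: (proto_inv_deliver I1 Hm).
- case: ifP => // _ [<-]; apply: (proto_inv_send I) => m' [<-|] //.
- case: ifP => // /andP [jB _] [<-]; apply: (proto_inv_send I) => m' [<-|] //.
  by rewrite /= /honest jB.
- case: ifP => // jB [<-]; apply: (proto_inv_send I) => m' [<-|] //.
  by rewrite /= /honest jB.
Qed.

Lemma proto_inv_init : proto_inv (init enc v0) (fun _ => t0).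
Proof.
split => //.
- move=> j; rewrite /init /=; split => // x; rewrite inE => /eqP ->.
  by rewrite /init_entries; apply: map_f; rewrite mem_enum.
Qed.

End Preservation.

Section StepFacts.
Variables (E V : eqType) (n k delta : nat).
Variables (enc : V -> 'I_n -> E) (dec : seq E -> V) (B : {set 'I_n}).

Local Notation St := (State E n V).
Local Notation Entry := (Entry E).
Local Notation covers := (covers delta).
Local Notation proto_inv := (proto_inv k delta B).
Local Notation step := (step k delta enc dec B).

Definition write_phase (x : CState E n V) := match x with WPut _ | WDone => true | _ => false end.

Lemma best_in_cand (rs : seq ('I_n * seq Entry)) t : best k rs = Some t -> t \in cand k rs.
Proof.
rewrite /best; elim: (cand k rs) t => [|x l IH] t //=.
case E1: (foldr _ None l) => [t'|] [<-].
  rewrite /tmax; case: ifP => _; last by rewrite inE eqxx.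
  by rewrite inE (IH _ E1) orbT.
by rewrite inE eqxx.
Qed.

Lemma cand_le_best (rs : seq ('I_n * seq Entry)) t t' :
  t \in cand k rs -> best k rs = Some t' -> tag_le t t'.
Proof.
rewrite /best; elim: (cand k rs) t' => [//|y l IH] t'; rewrite inE => /orP [/eqP ->|tl] /=.
  by case: (foldr _ None l) => [t''|] [<-]; [exact: tag_le_tmaxl | exact: tag_lexx].
case E1: (foldr _ None l) => [t''|] [<-].
  exact: tag_le_trans (IH _ tl E1) (tag_le_tmaxr _ _).
by case: (l) tl E1.
Qed.

Lemma cand_signed (rs : seq ('I_n * seq Entry)) (S : seq Entry) t :
  (forall p, p \in rs -> {subset p.2 <= S}) -> t \in cand k rs -> t \in map (@etag E) S.
Proof.
move=> H; rewrite /cand mem_filter => /andP [_ /flattenP [l /mapP [p pr ->] /mapP [x xp ->]]].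
by apply: map_f; apply: (H p pr).
Qed.

Lemma step_signed (s s' : St) g a :
  proto_inv s g -> step s a = Some s' ->
  exists l, signed s' = signed s ++ l /\
   forall e, e \in l -> (etag e \in map (@etag E) (signed s)) \/
     [/\ (exists v rs, cst s (etag e).2 = WGet v rs), write_phase (cst s' (etag e).2),
         wtags_step g s a (etag e).2 = etag e & ~~ is_resp_by (etag e).2 a].
Proof.
move=> [L M C].
case: a => [c|c v|c t v|c|idx|j c o e|j c o Ld|j c o] /=.
- by case: (cst s c) => // -[<-]; exists [::]; rewrite cats0.
- by case: (cst s c) => // -[<-]; exists [::]; rewrite cats0.
- by case: (cst s c) => // t' v'; case: ifP => // _ [<-]; exists [::]; rewrite cats0.
- by case: (cst s c) => // -[<-]; exists [::]; rewrite cats0.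
- case Hon: (onth (net s) idx) => [m|//] [<-].
  case: m Hon => [c o j|c o j|c o j e|j c o e|j c o Ld|j c o] Hon /=;
    try (by exists [::]; rewrite cats0; repeat case: ifP => //; case: (max_entry _)).
  + case: ifP => _; last by exists [::]; rewrite cats0.
    rewrite /client_tag /=; case Ec: (cst s c) => [||||v rs||]; try by exists [::]; rewrite cats0.
    case: ifP => _; last by exists [::]; rewrite cats0.
    case: ifP => _; last by exists [::]; rewrite cats0.
    eexists; split; first by [].
    move=> x /mapP [jj _ ->]; right; rewrite /etag /=; split.
    * by exists v, rs.
    * by rewrite /setc /= upd_same.
    * by rewrite ?Ec /= ?upd_same ?eqxx.
    * by [].
  + case: ifP => _; last by exists [::]; rewrite cats0.
    rewrite /client_data /=; case Ec: (cst s c) => [|rs|||||]; try by exists [::]; rewrite cats0.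
    case: ifP => [/andP [nj _]|_]; last by exists [::]; rewrite cats0.
    case: ifP => _; last by exists [::]; rewrite cats0.
    case Eb: (best _) => [t|]; last by exists [::]; rewrite cats0.
    eexists; split; first by [].
    move=> x /mapP [jj _ ->]; left; rewrite /etag /=.
    apply: (cand_signed _ (best_in_cand Eb)) => p.
    rewrite mem_rcons inE => /orP [/eqP -> y|pr]; first by rewrite mem_filter => /andP [].
    by move: (C c); rewrite /client_ok Ec => -[_ /(_ p pr)].
  + case: ifP => _; last by exists [::]; rewrite cats0.
    rewrite /client_ack; case: (cst s c) => [||t v acks|||acks|]; try by exists [::]; rewrite cats0.
    * by case: ifP => _; [case: ifP|]; exists [::]; rewrite cats0.
    * by case: ifP => _; [case: ifP|]; exists [::]; rewrite cats0.
- by case: ifP => // _ [<-]; exists [::]; rewrite cats0.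
- by case: ifP => // _ [<-]; exists [::]; rewrite cats0.
- by case: ifP => // _ [<-]; exists [::]; rewrite cats0.
Qed.

Definition cstate_step (x y : CState E n V) : Prop :=
  match x, y with
  | WGet _ _, WGet _ _ | WGet _ _, WPut _ | RGet _, RGet _ | RGet _, RPut _ _ _
  | WPut _, WPut _ | WPut _, WDone => True
  | RPut t _ _, RPut t' _ _ | RPut t _ _, RDone t' _ => t = t'
  | _, _ => False end.

Definition is_inv_by (c : nat) (a : Action E n V) :=
  match a with InvRead c' | InvWrite c' _ => c' == c | _ => false end.

Lemma step_cstate (s s' : St) c a :
  step s a = Some s' ->
  [\/ cst s' c = cst s c /\ ocnt s' c = ocnt s c,
      is_resp_by c a /\ cst s' c = Idle /\ ocnt s' c = ocnt s c,
      [/\ cst s c = Idle, is_inv_by c a, ocnt s' c = (ocnt s c).+1 &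
         (a = InvRead c /\ cst s' c = RGet [::]) \/ (exists v, a = InvWrite c v /\ cst s' c = WGet v [::])]
    | [/\ ~~ is_resp_by c a, ~~ is_inv_by c a, ocnt s' c = ocnt s c & cstate_step (cst s c) (cst s' c)]].
Proof.
case: a => [c'|c' v|c' t v|c'|idx|j c' o e|j c' o Ld|j c' o] /=.
- case Ec: (cst s c') => // -[<-] /=; rewrite !updE.
  case: (eqVneq c c') => [Ecc|ne]; last by constructor 1.
  by subst c; constructor 3; split; rewrite ?eqxx //; left.
- case Ec: (cst s c') => // -[<-] /=; rewrite !updE.
  case: (eqVneq c c') => [Ecc|ne]; last by constructor 1.
  by subst c; constructor 3; split; rewrite ?eqxx //; right; exists v.
- case Ec: (cst s c') => // [t' v']; case: ifP => // _ [<-] /=; rewrite /setc /= !updE.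
  case: (eqVneq c c') => [Ecc|ne]; last by constructor 1.
  by subst c; constructor 2; rewrite ?eqxx.
- case Ec: (cst s c') => // -[<-] /=; rewrite /setc /= !updE.
  case: (eqVneq c c') => [Ecc|ne]; last by constructor 1.
  by subst c; constructor 2; rewrite ?eqxx.
- case Hon: (onth (net s) idx) => [m|//] [<-].
  case: m Hon => [c' o j|c' o j|c' o j e|j c' o e|j c' o Ld|j c' o] Hon /=;
    try (by constructor 1; repeat case: ifP => //; case: (max_entry _)).
  + case: ifP => _; last by constructor 1.
    rewrite /client_tag /=; case Ec: (cst s c') => [||||v rs||]; try by constructor 1.
    case: ifP => _; last by constructor 1.
    case: (eqVneq c c') => [Ecc|ne]; last first.
      by case: ifP => _; constructor 1; rewrite /setc /put_data /= ?updE ?(negbTE ne).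
    by subst c; constructor 4; case: ifP => _; split => //; rewrite /setc /put_data /= ?updE ?eqxx ?Ec.
  + case: ifP => _; last by constructor 1.
    rewrite /client_data /=; case Ec: (cst s c') => [|rs|||||]; try by constructor 1.
    case: ifP => _; last by constructor 1.
    case: (eqVneq c c') => [Ecc|ne]; last first.
      by case: ifP => _; [case: (best _) => [t|]|]; constructor 1; rewrite /setc /put_data /= ?updE ?(negbTE ne).
    by subst c; constructor 4; case: ifP => _; [case: (best _) => [t|]|]; split => //; rewrite /setc /put_data /= ?updE ?eqxx ?Ec.
  + case: ifP => _; last by constructor 1.
    rewrite /client_ack; case Ec: (cst s c') => [||t v acks|||acks|]; try by constructor 1.
    * case: ifP => _; last by constructor 1.
      case: (eqVneq c c') => [Ecc|ne]; last first.
        by case: ifP => _; constructor 1; rewrite /setc /= ?updE ?(negbTE ne).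
      by subst c; constructor 4; case: ifP => _; split => //; rewrite /setc /= ?updE ?eqxx ?Ec.
    * case: ifP => _; last by constructor 1.
      case: (eqVneq c c') => [Ecc|ne]; last first.
        by case: ifP => _; constructor 1; rewrite /setc /= ?updE ?(negbTE ne).
      by subst c; constructor 4; case: ifP => _; split => //; rewrite /setc /= ?updE ?eqxx ?Ec.
- by case: ifP => // _ [<-]; constructor 1.
- by case: ifP => // _ [<-]; constructor 1.
- by case: ifP => // _ [<-]; constructor 1.
Qed.

Lemma step_resp_done (s s' : St) c a :
  step s a = Some s' -> is_resp_by c a ->
  cst s c = WDone \/ exists t v, cst s c = RDone t v.
Proof.
case: a => //=.
- move=> c' t v S /eqP Ec; subst c'; move: S.
  by case: (cst s c) => // t' v' _; right; exists t', v'.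
- move=> c' S /eqP Ec; subst c'; move: S.
  by case: (cst s c) => // _; left.
Qed.

Lemma wtags_step_other g (s : St) a c :
  (forall v rs, cst s c <> WGet v rs) -> wtags_step g s a c = g c.
Proof.
move=> H; case: a => //= idx; case: (onth _ _) => // -[] //= j c' o e.
case Ec: (cst s c') => // [v rs]; rewrite updE; case: eqP => // Ecc.
by subst c'; case: (H v rs).
Qed.

Lemma step_write_phase g (s s' : St) c a :
  step s a = Some s' -> ~~ is_resp_by c a -> write_phase (cst s c) ->
  write_phase (cst s' c) /\ wtags_step g s a c = g c.
Proof.
move=> S nr W; split; last by apply: wtags_step_other => v rs Ec; rewrite Ec in W.
case: (step_cstate c S) => [[-> _]|[r _]|[Ec _ _ _]|[_ _ _ T]] //; first by rewrite r in nr.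
  by rewrite Ec in W.
move: T W; case: (cst s c) => //; case: (cst s' c) => //.
Qed.

Lemma step_wget (s s' : St) c a v rs :
  step s a = Some s' -> cst s' c = WGet v rs ->
  (exists v, a = InvWrite c v) \/ ((exists v rs, cst s c = WGet v rs) /\ ~~ is_resp_by c a).
Proof.
move=> S Ec'.
have NR : (exists v rs, cst s c = WGet v rs) -> ~~ is_resp_by c a.
  move=> [v' [rs' E1]]; apply/negP => r.
  by case: (step_resp_done S r) => [E2|[t [v'' E2]]]; rewrite E1 in E2.
case: (step_cstate c S) => [[E1 _]|[_ [E1 _]]|[_ _ _ [[_ E1]|[v' [-> _]]]]|[_ _ _ T]].
- by right; split => //; [exists v, rs | apply: NR; exists v, rs]; rewrite -E1.
- by rewrite E1 in Ec'.
- by rewrite E1 in Ec'.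
- by left; exists v'.
- move: T; rewrite Ec'; case Ec: (cst s c) => // [v' rs'] _.
  by right; split; [exists v', rs' | apply: NR; exists v', rs'].
Qed.

Lemma step_covers (s s' : St) g a j t :
  proto_inv s g -> step s a = Some s' -> covers t (lists s j) -> covers t (lists s' j).
Proof.
move=> [L _ _].
case: a => [c|c v|c t' v|c|idx|j' c o e|j' c o Ld|j' c o] /=.
- by case: (cst s c) => // -[<-].
- by case: (cst s c) => // -[<-].
- by case: (cst s c) => // t'' v'; case: ifP => // _ [<-].
- by case: (cst s c) => // -[<-].
- case Hon: (onth (net s) idx) => [m|//] [<-].
  case: m Hon => [c o j'|c o j'|c o j' e|j' c o e|j' c o Ld|j' c o] Hon /=;
    try (by repeat case: ifP => //; case: (max_entry _)).
  + case: ifP => // _; rewrite /setlist /=; case: ifP => [/eqP Ej|//]; subst j'.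
    by case: (L j) => U _ _; apply: store_covers.
  + case: ifP => // _; rewrite /client_tag /=; case: (cst s c) => // v rs.
    by repeat case: ifP => //.
  + case: ifP => // _; rewrite /client_data /=; case: (cst s c) => // rs.
    by repeat case: ifP => //; case: (best _).
  + case: ifP => // _; rewrite /client_ack /=; case: (cst s c) => //.
    * by move=> ? ? ?; repeat case: ifP => //.
    * by move=> ?; repeat case: ifP => //.
- by case: ifP => // _ [<-].
- by case: ifP => // _ [<-].
- by case: ifP => // _ [<-].
Qed.

End StepFacts.

Section Quorums.
Variables (n k : nat) (B : {set 'I_n}).
Local Notation q := (quorum n k).

Lemma count_card (P : pred 'I_n) (R : seq 'I_n) : uniq R -> count P R = #|[set j in R | P j]|.
Proof.
move=> U; rewrite -size_filter -(card_uniqP (filter_uniq P U)).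
by apply: eq_card => j; rewrite in_set mem_filter andbC.
Qed.

Lemma quorum_meet_honest (A R : seq 'I_n) :
  uniq A -> size A = q -> uniq R -> size R = q -> n + k + #|B| <= q.*2 ->
  k <= count (fun j => (j \in A) && (j \notin B)) R.
Proof.
move=> UA SA UR SR H.
rewrite count_card //.
set RS := [set j in R]; set AS := [set j in A].
have -> : [set j in R | (j \in A) && (j \notin B)] = (RS :&: AS) :\: B.
  by apply/setP => j; rewrite !inE; case: (j \in R); case: (j \in A); case: (j \in B).
have cR : #|RS| = q by rewrite cardsE (card_uniqP UR).
have cA : #|AS| = q by rewrite cardsE (card_uniqP UA).
have h1 := cardsUI RS AS.
have h2 : #|RS :|: AS| <= n by have := max_card (RS :|: AS); rewrite card_ord.
have h3 := cardsD (RS :&: AS) B.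
have h4 : #|(RS :&: AS) :&: B| <= #|B| by apply: subset_leq_card; apply: subsetIr.
lia.
Qed.

End Quorums.

Section ReadTracking.
Variables (E V : eqType) (n k delta : nat).
Variables (enc : V -> 'I_n -> E) (dec : seq E -> V) (B : {set 'I_n}).

Local Notation St := (State E n V).
Local Notation Entry := (Entry E).
Local Notation q := (quorum n k).
Local Notation proto_inv := (proto_inv k delta B).
Local Notation honest := (honest B).
Local Notation step := (step k delta enc dec B).

Lemma step_data_reply (s s' : St) a j c o L :
  step s a = Some s' -> List.In (MRData j c o L) (net s') ->
  List.In (MRData j c o L) (net s) \/ j \in B \/ L = lists s j.
Proof.
case: a => [c'|c' v|c' t v|c'|idx|j' c' o' e|j' c' o' Ld|j' c' o'] /=.
- case: (cst s c') => // -[<-] /= Hin; case: (List.in_app_or _ _ _ Hin) => [|H]; [auto | by case: (In_map_enum H)].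
- case: (cst s c') => // -[<-] /= Hin; case: (List.in_app_or _ _ _ Hin) => [|H]; [auto | by case: (In_map_enum H)].
- by case: (cst s c') => // t'' v'; case: ifP => // _ [<-]; auto.
- by case: (cst s c') => // -[<-]; auto.
- case Hon: (onth (net s) idx) => [m|//] [<-].
  have Rm : forall x, List.In x (take idx (net s) ++ drop idx.+1 (net s)) -> List.In x (net s).
    by move=> x; apply: In_take_drop.
  case: m Hon => [c'' o'' j''|c'' o'' j''|c'' o'' j'' e|j'' c'' o'' e|j'' c'' o'' Ld|j'' c'' o''] Hon /=.
  + case: ifP => _; first by move=> Hin; left; exact: Rm Hin.
    case: (max_entry _) => [e|]; last by move=> Hin; left; exact: Rm Hin.
    by move=> Hin; case: (List.in_app_or _ _ _ Hin) => [Hr|[]] //; left; exact: Rm Hr.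
  + case: ifP => _; first by move=> Hin; left; exact: Rm Hin.
    move=> Hin; case: (List.in_app_or _ _ _ Hin) => [Hr|[]]; [by left; exact: Rm Hr| |by []].
    by case=> -> _ _ ->; auto.
  + case: ifP => _; first by move=> Hin; left; exact: Rm Hin.
    by move=> Hin; case: (List.in_app_or _ _ _ Hin) => [Hr|[]] //; left; exact: Rm Hr.
  + case: ifP => _; last by move=> Hin; left; exact: Rm Hin.
    rewrite /client_tag; case: (cst s c'') => [|?|? ? ?|? ?|v rs|?|] /=; try by move=> Hin; left; exact: Rm Hin.
    case: ifP => _; last by move=> Hin; left; exact: Rm Hin.
    case: ifP => _ /=; last by move=> Hin; left; exact: Rm Hin.
    by move=> Hin; case: (List.in_app_or _ _ _ Hin) => [Hr|H]; [left; exact: Rm Hr | case: (In_map_enum H)].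
  + case: ifP => _; last by move=> Hin; left; exact: Rm Hin.
    rewrite /client_data; case: (cst s c'') => [|rs|? ? ?|? ?|? ?|?|] /=; try by move=> Hin; left; exact: Rm Hin.
    case: ifP => _; last by move=> Hin; left; exact: Rm Hin.
    case: ifP => _ /=; last by move=> Hin; left; exact: Rm Hin.
    case: (best _) => [t|] /=; last by move=> Hin; left; exact: Rm Hin.
    by move=> Hin; case: (List.in_app_or _ _ _ Hin) => [Hr|H]; [left; exact: Rm Hr | case: (In_map_enum H)].
  + case: ifP => _; last by move=> Hin; left; exact: Rm Hin.
    rewrite /client_ack; case: (cst s c'') => [|?|t v acks|? ?|? ?|acks|] /=; try by move=> Hin; left; exact: Rm Hin.
    * by case: ifP => _; [case: ifP => _|]; move=> Hin; left; exact: Rm Hin.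
    * by case: ifP => _; [case: ifP => _|]; move=> Hin; left; exact: Rm Hin.
- by case: ifP => // _ [<-] Hin; case: (List.in_app_or _ _ _ Hin) => [|[]] //; auto.
- case: ifP => // /andP [jB _] [<-] Hin; case: (List.in_app_or _ _ _ Hin) => [|[]] //; auto.
  by case=> <- _ _ _; auto.
- by case: ifP => // _ [<-] Hin; case: (List.in_app_or _ _ _ Hin) => [|[]] //; auto.
Qed.

Lemma step_rget (s s' : St) a c rs :
  step s a = Some s' -> cst s c = RGet rs ->
  cst s' c = RGet rs \/ exists j L, [/\ List.In (MRData j c (ocnt s c) L) (net s),
    j \notin map fst rs &
    cst s' c = RGet (rcons rs (j, [seq e <- L | e \in signed s])) \/
    (size (rcons rs (j, [seq e <- L | e \in signed s])) = q /\
     exists t v, best k (rcons rs (j, [seq e <- L | e \in signed s])) = Some t /\ cst s' c = RPut t v [::])].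
Proof.
move=> S Ec.
case: a S => [c'|c' v|c' t v|c'|idx|j' c' o' e|j' c' o' Ld|j' c' o'] /=.
- case Ec': (cst s c') => // -[<-] /=; left; rewrite updE; case: eqP => // Ecc.
  by subst c'; rewrite Ec in Ec'.
- case Ec': (cst s c') => // -[<-] /=; left; rewrite updE; case: eqP => // Ecc.
  by subst c'; rewrite Ec in Ec'.
- case Ec': (cst s c') => // [t' v']; case: ifP => // _ [<-] /=; left; rewrite updE; case: eqP => // Ecc.
  by subst c'; rewrite Ec in Ec'.
- case Ec': (cst s c') => // -[<-] /=; left; rewrite updE; case: eqP => // Ecc.
  by subst c'; rewrite Ec in Ec'.
- case Hon: (onth (net s) idx) => [m|//] [<-].
  case: m Hon => [c'' o'' j''|c'' o'' j''|c'' o'' j'' e|j'' c'' o'' e|j'' c'' o'' Ld|j'' c'' o''] Hon /=;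
    try (by left; repeat case: ifP => //; case: (max_entry _)).
  + left; case: ifP => _ //; rewrite /client_tag; case Ec': (cst s c'') => [|?|? ? ?|? ?|v rs'|?|] //=.
    case: ifP => _ //; case: (eqVneq c c'') => [Ecc|ne].
      by subst c''; rewrite Ec in Ec'.
    by case: ifP => _; rewrite /setc /put_data /= updE (negbTE ne).
  + case: ifP => [/eqP Eo|_]; last by left.
    rewrite /client_data; case Ec': (cst s c'') => [|rs'|? ? ?|? ?|? ?|?|] //=; try by left.
    case: (eqVneq c c'') => [Ecc|ne]; last first.
      left; case: ifP => _ //; case: ifP => _; last by rewrite /setc /= updE (negbTE ne).
      by case: (best _) => [t|]; rewrite /setc /put_data /= updE (negbTE ne).
    subst c''; rewrite Ec in Ec'; case: Ec' => Ers; subst rs'.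
    case: ifP => [/andP [nj _]|_]; last by left.
    right; exists j'', Ld; split => //; first by subst o''; apply: In_onth Hon.
    case: ifP => [/eqP Sz|_]; last by left; rewrite /setc /= updE eqxx.
    case Eb: (best _) => [t|]; last by left; rewrite /setc /= updE eqxx.
    right; split => //; exists t, (dec (elems t (rcons rs (j'', [seq e <- Ld | e \in signed s])))).
    by rewrite /put_data /setc /= updE eqxx.
  + left; case: ifP => _ //; rewrite /client_ack; case Ec': (cst s c'') => [|?|t v acks|? ?|? ?|acks|] //=.
    * case: ifP => _ //; case: (eqVneq c c'') => [Ecc|ne]; first by subst c''; rewrite Ec in Ec'.
      by case: ifP => _; rewrite /setc /= updE (negbTE ne).
    * case: ifP => _ //; case: (eqVneq c c'') => [Ecc|ne]; first by subst c''; rewrite Ec in Ec'.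
      by case: ifP => _; rewrite /setc /= updE (negbTE ne).
- by case: ifP => // _ [<-]; left.
- by case: ifP => // _ [<-]; left.
- by case: ifP => // _ [<-]; left.
Qed.

Definition read_sees (s : St) c o tm (A : seq 'I_n) :=
  [/\ ocnt s c = o,
      (forall j L, List.In (MRData j c o L) (net s) -> j \in A -> honest j -> tm \in map (@etag E) L) &
      match cst s c with
      | RGet rs => forall p, p \in rs -> p.1 \in A -> honest p.1 -> tm \in map (@etag E) p.2
      | RPut t _ _ | RDone t _ => tag_le tm t
      | _ => False end].

Lemma sub_in_count (T : eqType) (a1 a2 : pred T) (s : seq T) :
  {in s, forall x, a1 x -> a2 x} -> count a1 s <= count a2 s.
Proof.
move=> H; rewrite (@eq_in_count _ a1 (predI a1 a2)); last first.
  by move=> x xs /=; case E1: (a1 x) => //=; rewrite (H x xs E1).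
by apply: sub_count => x /andP [].
Qed.

Lemma quorum_replies_best_ge (rs : seq ('I_n * seq Entry)) A tm t :
  0 < k -> n + k + #|B| <= q.*2 -> uniq A -> size A = q -> uniq (map fst rs) -> size rs = q ->
  (forall p, p \in rs -> p.1 \in A -> honest p.1 -> tm \in map (@etag E) p.2) ->
  best k rs = Some t -> tag_le tm t.
Proof.
move=> k0 Hq UA SA Ur Sr HC Eb.
have Hk := quorum_meet_honest UA SA Ur ltac:(by rewrite size_map) Hq.
rewrite count_map in Hk.
have Hk2 : k <= count (fun p => tm \in map (@etag E) p.2) rs.
  apply: leq_trans Hk _; apply: sub_in_count => p pr /= /andP [pA hp]; exact: HC.
apply: (cand_le_best _ Eb); rewrite /cand mem_filter Hk2 /=.
have : 0 < count (fun p => tm \in map (@etag E) p.2) rs by apply: leq_trans k0 Hk2.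
rewrite -has_count => /hasP [p pr tp]; apply/flattenP; exists (map (@etag E) p.2) => //.
exact: map_f.
Qed.

Lemma read_sees_step (s s' : St) g a c o tm A :
  0 < k ->
  proto_inv s g -> step s a = Some s' -> ~~ is_resp_by c a ->
  (forall j, j \in A -> honest j -> tm \in map (@etag E) (lists s j)) ->
  uniq A -> size A = q -> n + k + #|B| <= q.*2 ->
  read_sees s c o tm A -> read_sees s' c o tm A.
Proof.
move=> k0 I S nr HA UA SA Hq [Eo HM HC].
have [L M C] := I.
have HM' : forall j L, List.In (MRData j c o L) (net s') -> j \in A -> honest j -> tm \in map (@etag E) L.
  move=> j L' Hin jA hj.
  case: (step_data_reply S Hin) => [/HM|[jB|->]]; [exact | by rewrite /honest jB in hj | exact: HA].
have Eo' : ~~ is_inv_by c a -> ocnt s' c = o.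
  move=> ni; rewrite -Eo.
  case: (step_cstate c S) => [[_ ->]|[_ [_ ->]]|[_ ii _ _]|[_ _ -> _]] //.
  by rewrite ii in ni.
have NI : (cst s c <> Idle) -> ~~ is_inv_by c a.
  move=> NId; apply/negP => ii; apply: NId.
  clear -S ii; move: S ii; case: a => //= [c'|c' v] + /eqP Ecc; subst c'; by case: (cst s c).
case Ec: (cst s c) HC => [|rs|t v acks|t v|v rs|acks|] //= HC.
- have Eo2 := Eo' (NI ltac:(by rewrite Ec)).
  case: (step_rget S Ec) => [Ec'|[j [Ld [Hin nj HH]]]].
    by split => //; rewrite Ec'.
  have HC' : forall p, p \in rcons rs (j, [seq e <- Ld | e \in signed s]) ->
      p.1 \in A -> honest p.1 -> tm \in map (@etag E) p.2.
    move=> p; rewrite mem_rcons inE => /orP [/eqP -> /= jA hj|/HC //].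
    have := M _ Hin; case/(_ hj) => _ Hsub.
    have -> : [seq e <- Ld | e \in signed s] = Ld by apply/all_filterP/allP.
    by apply: (HM j Ld) => //; move: Hin; rewrite Eo.
  case: HH => [Ec'|[Sz [t [v [Eb Ec']]]]].
    by split => //; rewrite Ec'.
  split => //; rewrite Ec'; apply: (quorum_replies_best_ge k0 Hq UA SA _ Sz HC' Eb).
  by move: (C c); rewrite /client_ok Ec map_rcons rcons_uniq nj => -[-> _].
- have Eo2 := Eo' (NI ltac:(by rewrite Ec)).
  split => //.
  case: (step_cstate c S) => [[-> _]|[r _]|[E1 _ _ _]|[_ _ _ T]]; first by rewrite Ec.
  + by rewrite r in nr.
  + by rewrite E1 in Ec.
  + by move: T; rewrite Ec; case: (cst s' c) => // [t' ? ?|t' ?] <-.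
- have Eo2 := Eo' (NI ltac:(by rewrite Ec)).
  split => //.
  case: (step_cstate c S) => [[-> _]|[r _]|[E1 _ _ _]|[_ _ _ T]]; first by rewrite Ec.
  + by rewrite r in nr.
  + by rewrite E1 in Ec.
  + by move: T; rewrite Ec.
Qed.

End ReadTracking.

(** * Executions *)

Section Responses.
Variables (E V : eqType) (n : nat) (tr : seq (Action E n V)).

Lemma resp_idx_gt c i : i < resp_idx tr c i.
Proof. by rewrite /resp_idx; lia. Qed.

Lemma resp_le c i : i < size tr -> resp_idx tr c i <= size tr.
Proof.
move=> lt; rewrite /resp_idx; have := find_size (is_resp_by c) (drop i.+1 tr).
rewrite size_drop; lia.
Qed.

Lemma not_resp_before c i x : i < x < resp_idx tr c i -> ~~ is_resp_by c (nth dflt tr x).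
Proof.
move=> /andP [lt1 lt2]; rewrite /resp_idx in lt2.
have := @before_find _ dflt (is_resp_by c) (drop i.+1 tr) (x - i.+1) ltac:(lia).
rewrite nth_drop (_ : i.+1 + (x - i.+1) = x); last by lia.
by move=> ->.
Qed.

Lemma resp_at_idx c i : resp_idx tr c i < size tr -> is_resp_by c (nth dflt tr (resp_idx tr c i)).
Proof.
rewrite /resp_idx => lt.
have H : has (is_resp_by c) (drop i.+1 tr).
  rewrite has_find size_drop; lia.
by have := nth_find dflt H; rewrite nth_drop.
Qed.

Lemma nth_lt_size i x : nth dflt tr i = x -> x <> dflt -> i < size tr.
Proof. by move=> <- ne; rewrite ltnNge; apply/negP => le; apply: ne; rewrite nth_default. Qed.

End Responses.

Section Executions.
Variables (E V : eqType) (n k delta : nat).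
Variables (enc : V -> 'I_n -> E) (dec : seq E -> V) (v0 : V) (B : {set 'I_n}).
Variable tr : seq (Action E n V).
Hypothesis Hex : execution k delta enc dec v0 B tr.
Hypothesis n_pos : 0 < n.

Local Notation St := (State E n V).
Local Notation proto_inv := (proto_inv k delta B).
Local Notation step := (step k delta enc dec B).

Definition state_at m : St := odflt (init enc v0) (run k delta enc dec v0 B (take m tr)).

Fixpoint wtags_at m : nat -> Tag :=
  match m with 0 => fun _ => t0 | m'.+1 => wtags_step (wtags_at m') (state_at m') (nth dflt tr m') end.

Lemma run_from_None (l : seq (Action E n V)) :
  foldl (fun os a => obind (fun s => step s a) os) None l = None.
Proof. by elim: l. Qed.

Lemma run_some m : exists s, run k delta enc dec v0 B (take m tr) = Some s.
Proof.
move: Hex; rewrite /execution /run -{1}(cat_take_drop m tr) foldl_cat.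
case: (foldl _ _ (take m tr)) => [s|]; first by exists s.
by rewrite run_from_None.
Qed.

Lemma run_step m : m < size tr -> step (state_at m) (nth dflt tr m) = Some (state_at m.+1).
Proof.
move=> lt; case: (run_some m) => s Hs; case: (run_some m.+1) => s' Hs'.
have E1 : run k delta enc dec v0 B (take m.+1 tr) =
    obind (fun s => step s (nth dflt tr m)) (run k delta enc dec v0 B (take m tr)).
  by rewrite /run (take_nth dflt lt) foldl_rcons.
rewrite Hs Hs' /= in E1; by rewrite /state_at Hs Hs' /= E1.
Qed.

Lemma proto_inv_run m : m <= size tr -> proto_inv (state_at m) (wtags_at m).
Proof.
elim: m => [|m IH] lt; first by rewrite /state_at take0; exact: (proto_inv_init k delta enc v0 B).
exact: (proto_inv_step n_pos (IH (ltnW lt)) (run_step lt)).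
Qed.

Lemma signed_mono m m' : m <= m' <= size tr -> {subset signed (state_at m) <= signed (state_at m')}.
Proof.
move=> /andP []; elim: m' => [|m' IH]; first by rewrite leqn0 => /eqP -> _ x.
rewrite leq_eqVlt => /orP [/eqP -> _ x //|]; rewrite ltnS => le lt x xs.
have [l [El _]] := step_signed (proto_inv_run (ltnW lt)) (run_step lt).
by rewrite El mem_cat (IH le (ltnW lt) x xs).
Qed.

Lemma covers_mono_run m m' j t : m <= m' <= size tr ->
  covers delta t (lists (state_at m) j) -> covers delta t (lists (state_at m') j).
Proof.
move=> /andP []; elim: m' => [|m' IH]; first by rewrite leqn0 => /eqP -> _.
rewrite leq_eqVlt => /orP [/eqP -> _ //|]; rewrite ltnS => le lt C.
exact: step_covers (proto_inv_run (ltnW lt)) (run_step lt) (IH le (ltnW lt) C).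
Qed.

Lemma quorum_covers_mono_run m m' t : m <= m' <= size tr -> quorum_covers k delta B (state_at m) t -> quorum_covers k delta B (state_at m') t.
Proof. by move=> H; apply: quorum_covers_mono => j t'; apply: covers_mono_run. Qed.

Definition writes_tag jw c t := exists y, [/\ jw < y, y <= resp_idx tr c jw, y <= size tr,
  write_phase (cst (state_at y) c) & wtags_at y c = t].

Lemma write_phase_persists jw c y z :
  jw < y -> y <= z -> z <= resp_idx tr c jw -> z <= size tr -> write_phase (cst (state_at y) c) ->
  write_phase (cst (state_at z) c) /\ wtags_at z c = wtags_at y c.
Proof.
move=> jy; elim: z => [|z IH]; first by rewrite leqn0 => /eqP ->.
rewrite leq_eqVlt => /orP [/eqP -> //|]; rewrite ltnS => yz zr zs W.
have [W' EG] := IH yz (ltnW zr) (ltnW zs) W.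
have nr : ~~ is_resp_by c (nth dflt tr z).
  by apply: (not_resp_before (c:=c) (i:=jw)); apply/andP; split; lia.
have [W2 EG2] := step_write_phase (wtags_at z) (run_step zs) nr W'.
by split => //=; rewrite EG2.
Qed.

Lemma writes_tag_fun jw c t t' : writes_tag jw c t -> writes_tag jw c t' -> t = t'.
Proof.
move=> [y [jy yr ys W <-]] [y' [jy' yr' ys' W' <-]].
case: (leqP y y') => le.
  by case: (write_phase_persists jy le yr' ys' W) => _ ->.
by case: (write_phase_persists jy' (ltnW le) yr ys W') => _ ->.
Qed.

Lemma wget_origin m c : m <= size tr -> (exists v rs, cst (state_at m) c = WGet v rs) ->
  exists jw, [/\ jw < m, (exists v, nth dflt tr jw = InvWrite c v) & m <= resp_idx tr c jw].
Proof.
elim: m => [|m IH] lt; first by rewrite /state_at take0 /= => -[v [rs]].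
move=> [v [rs Ec]].
case: (step_wget (run_step lt) Ec) => [[v' Ea]|[Hw nr]].
  by exists m; split => //; [exists v' | apply: resp_idx_gt].
case: (IH (ltnW lt) Hw) => jw [jm Hjw mr]; exists jw; split => //; first by lia.
rewrite leq_eqVlt in mr; case/orP: mr => [/eqP Er|//].
have := resp_at_idx (tr:=tr) (c:=c) (i:=jw); rewrite -Er => /(_ lt) r.
by rewrite r in nr.
Qed.

Lemma signed_origin m e : m <= size tr -> e \in signed (state_at m) -> etag e != t0 ->
  exists jw, [/\ jw < m, (exists v, nth dflt tr jw = InvWrite (etag e).2 v) & writes_tag jw (etag e).2 (etag e)].
Proof.
elim: m e => [|m IH] e lt.
  rewrite /state_at take0 /= /init_entries => /mapP [j _ ->].
  by rewrite /etag /= ?eqxx.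
move=> es n0.
have I := proto_inv_run (ltnW lt).
have [l [El Hl]] := step_signed I (run_step lt).
move: es; rewrite El mem_cat => /orP [es|el].
  by case: (IH e (ltnW lt) es n0) => jw [jm H1 H2]; exists jw; split => //; lia.
case: (Hl e el) => [/mapP [e' e's Et]|[Hw W Eg nr]].
  case: (IH e' (ltnW lt) e's); first by rewrite -Et.
  by move=> jw [jm H1 H2]; exists jw; rewrite Et; split => //; lia.
case: (wget_origin (ltnW lt) Hw) => jw [jm Hjw mr].
exists jw; split => //; first by lia.
have mr' : m.+1 <= resp_idx tr (etag e).2 jw.
  rewrite leq_eqVlt in mr; case/orP: mr => [/eqP Er|//].
  have := resp_at_idx (tr:=tr) (c:=(etag e).2) (i:=jw); rewrite -Er => /(_ lt) r.
  by rewrite r in nr.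
by exists m.+1; split => //; lia.
Qed.

Lemma write_done_covers jw c t : jw < size tr -> writes_tag jw c t -> resp_idx tr c jw < size tr ->
  quorum_covers k delta B (state_at (resp_idx tr c jw)) t /\ t \in map (@etag E) (signed (state_at (resp_idx tr c jw))).
Proof.
move=> js [y [jy yr ys W Eg]] rs.
have [W' EG] := write_phase_persists jy yr (leqnn _) (ltnW rs) W.
have r := resp_at_idx rs.
have S := run_step rs.
have I := proto_inv_run (ltnW rs).
have [L M C] := I.
case: (step_resp_done S r) => [Ec|[t' [v' Ec]]]; last by rewrite Ec in W'.
by move: (C c); rewrite /client_ok Ec EG Eg => -[].
Qed.

End Executions.

(** * Two successive reads *)

Lemma size_le_functional_witness (T1 T2 : eqType) (R : T1 -> T2 -> Prop) (l : seq T2) (X : seq T1) :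
  uniq l -> uniq X -> (forall t, t \in l -> exists2 x, x \in X & R x t) ->
  (forall x t t', R x t -> R x t' -> t = t') -> size l <= size X.
Proof.
elim: l X => [//|t l IH] X /= /andP [tl Ul] UX H F.
case: (H t (mem_head _ _)) => x xX Rx.
have : size l <= size (rem x X).
  apply: IH; first exact: Ul; first exact: rem_uniq.
  - move=> t' t'l; case: (H t' ltac:(by rewrite inE t'l orbT)) => x' x'X Rx'.
    exists x' => //; rewrite mem_rem_uniq // inE x'X andbT.
    by apply/eqP => Ex; subst x'; have Et := F _ _ _ Rx Rx'; subst t'; rewrite t'l in tl.
  - exact: F.
have SX : 0 < size X by case: (X) xX.
rewrite size_rem //; lia.
Qed.

Section ReadAfterRead.
Variables (E V : eqType) (n k delta : nat).
Variables (enc : V -> 'I_n -> E) (dec : seq E -> V) (v0 : V) (B : {set 'I_n}).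
Variable tr : seq (Action E n V).
Hypothesis Hex : execution k delta enc dec v0 B tr.
Hypothesis n_pos : 0 < n.

Local Notation St := (State E n V).
Local Notation q := (quorum n k).
Local Notation proto_inv := (proto_inv k delta B).
Local Notation honest := (honest B).
Local Notation step := (step k delta enc dec B).
Local Notation state_at := (state_at k delta enc dec v0 B tr).
Local Notation quorum_covers := (quorum_covers k delta B).
Local Notation writes_tag := (writes_tag k delta enc dec v0 B tr).
Local Notation tags L := (map (@etag E) L).

Lemma step_resp_read (s s' : St) c t v :
  step s (RespRead c t v) = Some s' -> cst s c = RDone t v.
Proof. by rewrite /=; case: (cst s c) => // t' v'; case: ifP => // /andP [/eqP -> /eqP ->]. Qed.

Lemma read_sees_invoke (s s' : St) g c tm A :
  proto_inv s g -> step s (InvRead c) = Some s' -> read_sees B s' c (ocnt s' c) tm A.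
Proof.
move=> [L M C] /=; case Ec: (cst s c) => // -[<-] /=; split => //.
- move=> j L' Hin jA hj; case: (List.in_app_or _ _ _ Hin) => [H|H]; last by case: (In_map_enum H).
  have := M _ H; case/(_ hj) => + _; rewrite /upd ?eqxx; lia.
- by rewrite /= /upd eqxx.
Qed.

Lemma read_done_covers j c t v :
  nth dflt tr j = RespRead c t v -> quorum_covers (state_at j) t.
Proof.
move=> Hj; have sj : j < size tr by apply: (nth_lt_size Hj).
have := run_step Hex sj; rewrite Hj => /step_resp_read Ec.
by have [_ _ /(_ c)] := proto_inv_run Hex n_pos (ltnW sj); rewrite /client_ok Ec.
Qed.

Lemma exists_max_quorum_tag (s : St) t :
  quorum_covers s t -> exists tm, [/\ tag_le t tm, quorum_covers s tm &
    forall t', t' \in tags (signed s) -> quorum_covers s t' -> tag_le t' tm].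
Proof.
move=> Ct.
have [tm [_ Ctm Mx]] := exists_tag_max (ex_intro2 _ _ t (mem_head t (tags (signed s))) Ct).
exists tm; split => // [|t' t's]; first exact: Mx (mem_head _ _) Ct.
by apply: Mx; rewrite inE t's orbT.
Qed.

Variables (c i : nat) (tm : Tag).
Hypothesis read_inv : nth dflt tr i = InvRead c.
Hypothesis tm_max :
  forall t, t \in tags (signed (state_at i)) -> quorum_covers (state_at i) t -> tag_le t tm.

Definition concurrent_write jw :=
  if nth dflt tr jw is InvWrite c' _ then (jw < resp_idx tr c i) && (i < resp_idx tr c' jw)
  else false.

Lemma read_inv_lt_size : i < size tr.
Proof. exact: (nth_lt_size read_inv). Qed.

Lemma completed_write_tag_le jw c' t :
  writes_tag jw c' t -> resp_idx tr c' jw < i -> tag_le t tm.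
Proof.
move=> Own ri; have si := read_inv_lt_size.
have jws : jw < size tr by have := resp_idx_gt tr c' jw; lia.
have [Cq tS] := write_done_covers Hex n_pos jws Own ltac:(lia).
apply: tm_max; last by apply: (quorum_covers_mono_run Hex n_pos _ Cq); lia.
by apply: sub_map tS => x; apply: (signed_mono Hex n_pos); lia.
Qed.

Lemma newer_tag_concurrent_write d j e :
  i <= d < resp_idx tr c i -> e \in lists (state_at d) j -> tag_lt tm (etag e) ->
  exists jw, [/\ concurrent_write jw, jw < size tr,
    exists v, nth dflt tr jw = InvWrite (etag e).2 v & writes_tag jw (etag e).2 (etag e)].
Proof.
move=> /andP [id dr] eL lt; have si := read_inv_lt_size.
have ds : d <= size tr by have := resp_le c si; lia.
have [L _ _] := proto_inv_run Hex n_pos ds.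
have es : e \in signed (state_at d) by case: (L j) => _ _; apply.
have [jw [jwd [v Hv] Own]] := signed_origin Hex n_pos ds es (tag_lt_neq_t0 lt).
exists jw; split; [|lia|by exists v|by []].
rewrite /concurrent_write Hv; apply/andP; split; first lia.
rewrite ltnNge leq_eqVlt; apply/negP => /orP [/eqP Er|ri].
  by have := resp_at_idx (tr:=tr) (c:=(etag e).2) (i:=jw); rewrite Er read_inv => /(_ si).
by move: lt; rewrite tag_ltNge (completed_write_tag_le Own ri).
Qed.

(* A write that completed before the read leaves a tag at most [tm], so every
   tag above [tm] seen during the read comes from its own concurrent write. *)
Lemma newer_tags_le_concurrent d j :
  i <= d < resp_idx tr c i ->
  count (fun x => tag_lt tm (etag x)) (lists (state_at d) j) <= writes_concurrent tr c i.
Proof.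
move=> dd; have si := read_inv_lt_size.
have ds : d <= size tr by have := resp_le c si; lia.
have [L _ _] := proto_inv_run Hex n_pos ds; case: (L j) => UL _ _.
have -> : count (fun x => tag_lt tm (etag x)) (lists (state_at d) j)
        = size [seq t <- tags (lists (state_at d) j) | tag_lt tm t].
  by rewrite size_filter count_map.
have -> : writes_concurrent tr c i = size [seq x <- iota 0 (size tr) | concurrent_write x].
  by rewrite size_filter.
apply: (@size_le_functional_witness _ _
  (fun x t => (exists v, nth dflt tr x = InvWrite t.2 v) /\ writes_tag x t.2 t)).
- exact: filter_uniq.
- exact/filter_uniq/iota_uniq.
- move=> t; rewrite mem_filter => /andP [lt /mapP [e eL Et]]; subst t.
  have [jw [Cw jws Hw Own]] := newer_tag_concurrent_write dd eL lt.
  by exists jw; [rewrite mem_filter mem_iota Cw | split].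
- move=> x t t' [[v Hv] O1] [[v' Hv'] O2].
  move: Hv; rewrite Hv' => -[E2 _]; rewrite E2 in O2.
  exact: (writes_tag_fun Hex n_pos O1 O2).
Qed.

Hypothesis few_concurrent : writes_concurrent tr c i <= delta.

Lemma covered_tag_kept d j :
  i <= d < resp_idx tr c i -> covers delta tm (lists (state_at i) j) ->
  tm \in tags (lists (state_at d) j).
Proof.
move=> dd C; have si := read_inv_lt_size.
have idd : i <= d <= size tr by have := resp_le c si; lia.
case/orP: (covers_mono_run Hex n_pos idd C) => // newer.
by have := newer_tags_le_concurrent j dd; lia.
Qed.

Hypotheses (k_pos : 0 < k) (quorum_large : n + k + #|B| <= q.*2).

Lemma read_sees_until_resp A :
  uniq A -> size A = q ->
  (forall j, j \in A -> honest j -> covers delta tm (lists (state_at i) j)) ->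
  forall m, i < m <= resp_idx tr c i ->
  read_sees B (state_at m) c (ocnt (state_at i.+1) c) tm A.
Proof.
move=> UA SA HA; have si := read_inv_lt_size; have ri := resp_le c si.
elim=> [//|m IH] /andP [im mr]; have ms : m < size tr by lia.
have [Em|lt] := eqVneq m i.
  by subst m; apply: (read_sees_invoke _ _ (proto_inv_run Hex n_pos (ltnW si)));
     have := run_step Hex si; rewrite read_inv.
apply: (read_sees_step k_pos (proto_inv_run Hex n_pos (ltnW ms)) (run_step Hex ms)) => //.
- by apply: (not_resp_before (i := i)); lia.
- by move=> j jA hj; apply: covered_tag_kept; [lia | exact: HA].
- by apply: IH; lia.
Qed.

Lemma read_returns_ge_max t v :
  quorum_covers (state_at i) tm -> nth dflt tr (resp_idx tr c i) = RespRead c t v ->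
  tag_le tm t.
Proof.
move=> [A [UA SA HA]] Hr; have := resp_idx_gt tr c i => ir.
have [_ _] := read_sees_until_resp UA SA HA (m := resp_idx tr c i) ltac:(lia).
have sr : resp_idx tr c i < size tr by apply: (nth_lt_size Hr).
by have := run_step Hex sr; rewrite Hr => /step_resp_read ->.
Qed.

End ReadAfterRead.

Theorem mainTheorem8 (n k b delta : nat) (V E : eqType)
    (enc : V -> 'I_n -> E) (dec : seq E -> V) (v0 : V)
    (B : {set 'I_n}) (tr : seq (Action E n V)) :
  0 < k <= n ->
  1 <= delta ->
  (* [n,k] code: any k coded elements of one encoding recover the value *)
  (forall (v : V) (S : seq 'I_n), uniq S -> k <= size S ->
     dec [seq enc v j | j <- S] = v) ->
  (* at most b < (|C| - k)/3 Byzantine flexnodes *)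
  #|B| <= b -> 3 * b < n - k ->
  execution k delta enc dec v0 B tr ->
  (* at most delta writes concurrent with any read *)
  (forall c i, nth dflt tr i = InvRead c ->
     writes_concurrent tr c i <= delta) ->
  forall (c1 i1 j1 : nat) (t1 : Tag) (w1 : V) (c2 i2 j2 : nat) (t2 : Tag) (w2 : V),
    complete_read tr c1 i1 j1 t1 w1 ->
    complete_read tr c2 i2 j2 t2 w2 ->
    j1 < i2 ->
    tag_le t1 t2.
Proof.
move=> /andP [k_pos kn] _ _ HB Hb Hex Hconc c1 i1 j1 t1 w1 c2 i2 j2 t2 w2
  [_ _ Hj1] [Hi2 -> Hj2] j1i2.
have n_pos : 0 < n by lia.
have Hq : n + k + #|B| <= (quorum n k).*2 by rewrite /quorum; lia.
have si2 : i2 < size tr by apply: (nth_lt_size Hi2).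
have C1 : quorum_covers k delta B (state_at k delta enc dec v0 B tr i2) t1.
  by apply: (quorum_covers_mono_run Hex n_pos _ (read_done_covers Hex n_pos Hj1)); lia.
have [tm [t1tm Ctm Mx]] := exists_max_quorum_tag C1.
exact: tag_le_trans t1tm (read_returns_ge_max Hex n_pos Hi2 Mx (Hconc _ _ Hi2) k_pos Hq Ctm Hj2).
Qed.
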